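(* Let $n\ge3$, $1\le\lambda\le n-1$, and let $(N_\epsilon,g)$ be the neighbourhood geometry of type $(\lambda,n-\lambda)$. Then: (i) if $q\in\mathcal{F}$ then $\mathcal{P}\subset I^-(q)$; (ii) if $q\in\partial\mathcal{F}$ then $I^+(q)\subset\mathcal{F}$; (iii) if $q\in\partial\mathcal{F}$, then (a) if $\lambda\ne1$ then $\mathcal{P}\subset I^-(q)$, and (b) if $\lambda=1$ then either $I^-(q)\cap\mathcal{P}_2=\emptyset$ or $I^-(q)\cap\mathcal{P}_1=\emptyset$.
   Context: Neighbourhood geometry of type $(\lambda,n-\lambda)$: fix $\epsilon>0$ and $\zeta>1$; let $N_\epsilon=D_\epsilon\setminus\{0\}$, where $D_\epsilon$ is the open ball of radius $\epsilon$ about $0$ in $\mathbb{R}^n$ with Cartesian coordinates $(x^1,\dots,x^\lambda,y^1,\dots,y^{n-\lambda})$. Let $f=c-\sum_i(x^i)^2+\sum_j(y^j)^2$ ($c$ a constant), $h$ the flat Euclidean metric, and $g_{\mu\nu}=h_{\mu\nu}(h^{\alpha\beta}\partial_\alpha f\partial_\beta f)-\zeta\partial_\mu f\partial_\nu f$, a Lorentzian metric on $N_\epsilon$ time-oriented so that $f$ increases to the future. All chronological relations are taken within $N_\epsilon$: $a\ll b$ iff there is a future directed $C^1$ timelike curve in $N_\epsilon$ from $a$ to $b$; $I^+(a)=\{b:a\ll b\}$, $I^-(a)=\{b:b\ll a\}$. Let $\rho=(\sum_i(x^i)^2)^{1/2}$, $r=(\sum_j(y^j)^2)^{1/2}$,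 $m_1=(\sqrt\zeta-1)/\sqrt{\zeta-1}$, $m_2=(\sqrt\zeta+1)/\sqrt{\zeta-1}=1/m_1$. Define $\mathcal{P}=\{q\in N_\epsilon:r<m_1\rho\}$, $\mathcal{F}=\{q\in N_\epsilon:r>m_2\rho\}$, $\partial\mathcal{F}=\{q\in N_\epsilon: r=m_2\rho\}$. When $\lambda=1$, $\mathcal{P}_1=\{q\in\mathcal{P}:x^1>0\}$ and $\mathcal{P}_2=\{q\in\mathcal{P}:x^1<0\}$. *)

From Stdlib Require Import Reals.
From Coquelicot Require Import Coquelicot.
Open Scope R_scope.

(* Points of R^n are represented as functions nat -> R; only the coordinates
   0 .. n-1 are meaningful.  Coordinates 0 .. lam-1 are x^1..x^lam,
   coordinates lam .. n-1 are y^1..y^(n-lam). *)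

Fixpoint sumR (k : nat) (F : nat -> R) : R :=
  match k with
  | O => 0
  | S k' => sumR k' F + F k'
  end.

Definition hdot (n : nat) (v w : nat -> R) : R := sumR n (fun i => v i * w i).

Definition rho (lam : nat) (p : nat -> R) : R := sqrt (sumR lam (fun i => p i ^ 2)).
Definition rr (n lam : nat) (p : nat -> R) : R :=
  sqrt (sumR (n - lam) (fun j => p (lam + j)%nat ^ 2)).

Definition fP (n lam : nat) (c : R) (p : nat -> R) : R :=
  c - sumR lam (fun i => p i ^ 2) + sumR (n - lam) (fun j => p (lam + j)%nat ^ 2).

(* its partial derivatives  d_i f (p) : -2 x^i for the x-coordinates,
   2 y^j for the y-coordinates (independent of c) *)
Definition df (lam : nat) (p : nat -> R) (i : nat) : R :=
  if Nat.ltb i lam then -2 * p i else 2 * p i.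

Definition gmet (n lam : nat) (zeta : R) (p v w : nat -> R) : R :=
  hdot n v w * hdot n (df lam p) (df lam p)
  - zeta * hdot n (df lam p) v * hdot n (df lam p) w.

Definition fut_timelike (n lam : nat) (zeta : R) (p v : nat -> R) : Prop :=
  gmet n lam zeta p v v < 0 /\ 0 < hdot n (df lam p) v.

Definition inN (n : nat) (eps : R) (p : nat -> R) : Prop :=
  0 < hdot n p p /\ hdot n p p < eps ^ 2.

(* a << b within N_eps: there is a C^1 curve gamma (given by its components
   gamma i, i < n), parametrised by [0,1], lying in N_eps, from a to b, whose
   velocity is everywhere future directed timelike.  (C^1 on [0,1] is
   expressed as: the components are C^1 on all of R; any C^1 map on [0,1]
   extends to such a map.) *)
Definition chron (n lam : nat) (eps zeta : R) (a b : nat -> R) : Prop :=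
  exists gamma : nat -> R -> R,
    (forall i, (i < n)%nat -> forall t, ex_derive (gamma i) t) /\
    (forall i, (i < n)%nat -> forall t, continuous (Derive (gamma i)) t) /\
    (forall i, (i < n)%nat -> gamma i 0 = a i /\ gamma i 1 = b i) /\
    (forall t, 0 <= t <= 1 -> inN n eps (fun i => gamma i t)) /\
    (forall t, 0 <= t <= 1 ->
       fut_timelike n lam zeta (fun i => gamma i t) (fun i => Derive (gamma i) t)).

Definition m1 (zeta : R) : R := (sqrt zeta - 1) / sqrt (zeta - 1).
Definition m2 (zeta : R) : R := (sqrt zeta + 1) / sqrt (zeta - 1).

Definition inP (n lam : nat) (eps zeta : R) (q : nat -> R) : Prop :=
  inN n eps q /\ rr n lam q < m1 zeta * rho lam q.
Definition inF (n lam : nat) (eps zeta : R) (q : nat -> R) : Prop :=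
  inN n eps q /\ rr n lam q > m2 zeta * rho lam q.
Definition inbdF (n lam : nat) (eps zeta : R) (q : nat -> R) : Prop :=
  inN n eps q /\ rr n lam q = m2 zeta * rho lam q.
Definition inP1 (n lam : nat) (eps zeta : R) (q : nat -> R) : Prop :=
  inP n lam eps zeta q /\ q 0%nat > 0.
Definition inP2 (n lam : nat) (eps zeta : R) (q : nat -> R) : Prop :=
  inP n lam eps zeta q /\ q 0%nat < 0.

(* Write [J] for the reflection of the x-coordinates.  Since [df = 2 J z], a vector [v] at [z] is
   future timelike iff its margin [sqrt zeta <Jz, v> - |z| |v|] is positive, and the regions are
   level sets of two quadratic forms: [F] is [phiF > 0] and its boundary [dF] is [phiF = 0] for
   [phiF z = sqrt zeta <Jz, z> - |z|^2], while [P] is [phiP > 0] for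
   [phiP z = - sqrt zeta <Jz, z> - |z|^2].

   (ii) The derivative of [phiF] along a future timelike curve is at least twice the margin, so
   [phiF] increases strictly and a curve leaving [dF] enters [F].  (iii)(b) When [lam = 1] the set
   [phiF < 0] does not meet [x^1 = 0], so a timelike curve ending on [dF] cannot change the sign of [x^1].

   (i) Along [a p + b q] with [a = e^(K (1 - t)) - 1] and [b = e^(K t) - 1] the margin is at least
   [m (a^2 + b^2) - C (a + b)] with [m = min (phiP p) (phiF q) > 0], and [(a + 1) (b + 1) = e^K]
   makes [a + b] large.

   (iii)(a) For [lam >= 2], contract [p] exponentially while rotating its x-part onto the direction
   of the x-part [q_x] of [q] and letting its y-part die out; the radial contraction dominates the
   margin.  From the resulting small multiple [X0] of the unit vector along [q_x], follow [sqrt w]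
   to [q] in the plane spanned by [q_x] and [q_y], where [w(t) = (1 - t) X0^2 + t^2 (|q_x| + i |q_y|)^2]
   is read as a complex number.  There the timelike condition reads [sqrt zeta (- Re w') > |w'|],
   and [w'] is the sum of the timelike [-X0^2] and a multiple of the null [(|q_x| + i |q_y|)^2].
   The two curves are glued into a single C^1 curve by an affine reparametrisation. *)

From Stdlib Require Import Reals Lra Lia Psatz FunctionalExtensionality.
From Coquelicot Require Import Coquelicot.
Open Scope R_scope.

(** * Finite sums and the Euclidean inner product *)

Lemma sumR_ext k F G : (forall i, (i < k)%nat -> F i = G i) -> sumR k F = sumR k G.
Proof. induction k; simpl; intros H; auto. rewrite IHk, H; auto. Qed.

Lemma sumR_add k F G : sumR k (fun i => F i + G i) = sumR k F + sumR k G.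
Proof. induction k; simpl; [lra|]. rewrite IHk; ring. Qed.

Lemma sumR_scal k c F : sumR k (fun i => c * F i) = c * sumR k F.
Proof. induction k; simpl; [ring|]. rewrite IHk; ring. Qed.

Lemma sumR_lin k a b F G :
  sumR k (fun i => a * F i + b * G i) = a * sumR k F + b * sumR k G.
Proof. induction k; simpl; [ring|]. rewrite IHk; ring. Qed.

Lemma sumR_nonneg k F : (forall i, (i < k)%nat -> 0 <= F i) -> 0 <= sumR k F.
Proof.
  induction k; simpl; intros H; [lra|].
  pose proof (H k ltac:(lia)). pose proof (IHk ltac:(intros; apply H; lia)). lra.
Qed.

Lemma sumR_split a b F : sumR (a + b) F = sumR a F + sumR b (fun j => F (a + j)%nat).
Proof.
  induction b; simpl; [rewrite Nat.add_0_r; ring|].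
  rewrite Nat.add_succ_r; simpl. rewrite IHb; ring.
Qed.

Lemma sumR_eq0_nonneg k F : (forall i, (i < k)%nat -> 0 <= F i) -> sumR k F = 0 ->
  forall i, (i < k)%nat -> F i = 0.
Proof.
  induction k; simpl; intros H Hs i Hi; [lia|].
  pose proof (sumR_nonneg k F ltac:(intros; apply H; lia)).
  pose proof (H k ltac:(lia)).
  destruct (Nat.eq_dec i k) as [->|]; [lra|].
  apply IHk; [intros j Hj; apply H; lia | lra | lia].
Qed.

Lemma sumR_Cauchy_Schwarz k F G : sumR k (fun i => F i * G i) ^ 2 <=
  sumR k (fun i => F i * F i) * sumR k (fun i => G i * G i).
Proof.
  induction k; simpl; [lra|].
  set (S := sumR k (fun i => F i * G i)) in *.
  set (A := sumR k (fun i => F i * F i)) in *. set (B := sumR k (fun i => G i * G i)) in *.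
  assert (0 <= A) by (apply sumR_nonneg; intros; nra).
  assert (0 <= B) by (apply sumR_nonneg; intros; nra).
  assert (HS : 2 * S * (F k * G k) <= A * (G k * G k) + B * (F k * F k)).
  { set (a := F k) in *. set (b := G k) in *.
    assert (0 <= (A * (b * b) - B * (a * a)) ^ 2) by apply pow2_ge_0.
    assert (S ^ 2 * (a * b * (a * b)) <= A * B * (a * b * (a * b)))
      by (apply Rmult_le_compat_r; [nra | exact IHk]).
    assert (0 <= A * (b * b) + B * (a * a)) by nra.
    nra. }
  replace ((S + F k * G k) ^ 2) with (S ^ 2 + 2 * S * (F k * G k) + F k * F k * (G k * G k)) by ring.
  nra.
Qed.

Lemma hdot_sym n u v : hdot n u v = hdot n v u.
Proof. unfold hdot. apply sumR_ext; intros; ring. Qed.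

Lemma hdot_ext n u u' v v' :
  (forall i, (i < n)%nat -> u i = u' i) -> (forall i, (i < n)%nat -> v i = v' i) ->
  hdot n u v = hdot n u' v'.
Proof. intros Hu Hv; unfold hdot; apply sumR_ext; intros i Hi; rewrite Hu, Hv; auto. Qed.

Lemma hdot_linl n a b u v w :
  hdot n (fun i => a * u i + b * v i) w = a * hdot n u w + b * hdot n v w.
Proof. unfold hdot. rewrite <- !sumR_scal, <- sumR_add. apply sumR_ext; intros; ring. Qed.

Lemma hdot_linr n a b u v w :
  hdot n w (fun i => a * u i + b * v i) = a * hdot n w u + b * hdot n w v.
Proof. rewrite hdot_sym, hdot_linl, (hdot_sym n u), (hdot_sym n v); auto. Qed.

Lemma hdot_lin3l n a b c u v w z :
  hdot n (fun i => a * u i + b * v i + c * w i) z = a * hdot n u z + b * hdot n v z + c * hdot n w z.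
Proof. unfold hdot. rewrite <- !sumR_scal, <- !sumR_add. apply sumR_ext; intros; ring. Qed.

Lemma hdot_lin3r n a b c u v w z :
  hdot n z (fun i => a * u i + b * v i + c * w i) = a * hdot n z u + b * hdot n z v + c * hdot n z w.
Proof. rewrite hdot_sym, hdot_lin3l, !(hdot_sym n z). auto. Qed.

Lemma hdot_scall n a u w : hdot n (fun i => a * u i) w = a * hdot n u w.
Proof. unfold hdot. rewrite <- sumR_scal. apply sumR_ext; intros; ring. Qed.

Lemma hdot_scalr n a u w : hdot n w (fun i => a * u i) = a * hdot n w u.
Proof. rewrite hdot_sym, hdot_scall, hdot_sym; auto. Qed.

Lemma hdot_addl n u v w : hdot n (fun i => u i + v i) w = hdot n u w + hdot n v w.
Proof. unfold hdot. rewrite <- sumR_add. apply sumR_ext; intros; ring. Qed.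

Lemma hdot_addr n u v w : hdot n w (fun i => u i + v i) = hdot n w u + hdot n w v.
Proof. rewrite hdot_sym, hdot_addl, (hdot_sym n u), (hdot_sym n v); auto. Qed.

Lemma hdot_ge0 n u : 0 <= hdot n u u.
Proof. unfold hdot. apply sumR_nonneg; intros; nra. Qed.

Definition nrm n u := sqrt (hdot n u u).

Lemma nrm_ge0 n u : 0 <= nrm n u.
Proof. apply sqrt_pos. Qed.

Lemma nrm_sq n u : nrm n u * nrm n u = hdot n u u.
Proof. apply sqrt_sqrt, hdot_ge0. Qed.

Lemma nrm_lt_of_hdot n u e : 0 < e -> hdot n u u < e * e -> nrm n u < e.
Proof.
  intros He H. unfold nrm. rewrite <- (sqrt_square e) by lra.
  apply sqrt_lt_1_alt. split; auto. apply hdot_ge0.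
Qed.

Lemma hdot_lt_of_nrm n u e : nrm n u < e -> hdot n u u < e * e.
Proof. intros H. rewrite <- nrm_sq. pose proof (nrm_ge0 n u). nra. Qed.

Lemma Rabs_hdot_le n u v : Rabs (hdot n u v) <= nrm n u * nrm n v.
Proof.
  pose proof (sumR_Cauchy_Schwarz n u v) as HC. fold (hdot n u v) (hdot n u u) (hdot n v v) in HC.
  rewrite <- (nrm_sq n u), <- (nrm_sq n v) in HC.
  pose proof (nrm_ge0 n u). pose proof (nrm_ge0 n v).
  apply Rsqr_incr_0_var; [|nra]. rewrite <- Rsqr_abs. unfold Rsqr. nra.
Qed.

Lemma hdot_le_nrm n u v : hdot n u v <= nrm n u * nrm n v.
Proof. pose proof (Rabs_hdot_le n u v). pose proof (Rle_abs (hdot n u v)). lra. Qed.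

Lemma nrm_triangle n u v : nrm n (fun i => u i + v i) <= nrm n u + nrm n v.
Proof.
  pose proof (nrm_ge0 n u). pose proof (nrm_ge0 n v). pose proof (nrm_ge0 n (fun i => u i + v i)).
  apply Rsqr_incr_0_var; [|lra]. unfold Rsqr.
  rewrite nrm_sq, hdot_addl, !hdot_addr, (hdot_sym n v u).
  pose proof (hdot_le_nrm n u v). pose proof (nrm_sq n u). pose proof (nrm_sq n v). nra.
Qed.

Lemma nrm_scal n c u : nrm n (fun i => c * u i) = Rabs c * nrm n u.
Proof.
  unfold nrm. rewrite hdot_scall, hdot_scalr, <- Rmult_assoc, sqrt_mult_alt by nra.
  f_equal. apply sqrt_Rsqr_abs.
Qed.

Lemma nrm_lin_le n a b u v : 0 <= a -> 0 <= b ->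
  nrm n (fun i => a * u i + b * v i) <= a * nrm n u + b * nrm n v.
Proof.
  intros Ha Hb. eapply Rle_trans; [apply (nrm_triangle n (fun i => a * u i) (fun i => b * v i))|].
  rewrite !nrm_scal, !Rabs_right by lra. lra.
Qed.

(** * The timelike cone and the regions *)

Definition xrefl (lam : nat) (u : nat -> R) : nat -> R :=
  fun i => if Nat.ltb i lam then - u i else u i.
Definition xpart (lam : nat) (u : nat -> R) : nat -> R := fun i => if Nat.ltb i lam then u i else 0.
Definition ypart (lam : nat) (u : nat -> R) : nat -> R := fun i => if Nat.ltb i lam then 0 else u i.

Lemma hdot_xrefl_xrefl n lam u v : hdot n (xrefl lam u) (xrefl lam v) = hdot n u v.
Proof. unfold hdot, xrefl. apply sumR_ext; intros i _. destruct (Nat.ltb i lam); ring. Qed.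

Lemma hdot_xrefl_sym n lam u v : hdot n (xrefl lam u) v = hdot n u (xrefl lam v).
Proof. unfold hdot, xrefl. apply sumR_ext; intros i _. destruct (Nat.ltb i lam); ring. Qed.

Lemma xrefl_lin lam a b u v :
  xrefl lam (fun i => a * u i + b * v i) = (fun i => a * xrefl lam u i + b * xrefl lam v i).
Proof. apply functional_extensionality; intros i; unfold xrefl; destruct (Nat.ltb i lam); ring. Qed.

Lemma xrefl_scal lam a u : xrefl lam (fun i => a * u i) = (fun i => a * xrefl lam u i).
Proof. apply functional_extensionality; intros i; unfold xrefl; destruct (Nat.ltb i lam); ring. Qed.

Lemma nrm_xrefl n lam u : nrm n (xrefl lam u) = nrm n u.
Proof. unfold nrm. rewrite hdot_xrefl_xrefl. auto. Qed.

Lemma df_xrefl lam z : df lam z = (fun i => 2 * xrefl lam z i).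
Proof. apply functional_extensionality; intros i; unfold df, xrefl; destruct (Nat.ltb i lam); ring. Qed.

Lemma xpart_add_ypart lam u i : u i = xpart lam u i + ypart lam u i.
Proof. unfold xpart, ypart; destruct (Nat.ltb i lam); ring. Qed.

Section Splitting.
Variables (n lam : nat).
Hypothesis Hln : (lam <= n)%nat.

Lemma sumR_split_lam F : sumR n F = sumR lam F + sumR (n - lam) (fun j => F (lam + j)%nat).
Proof. replace n with (lam + (n - lam))%nat at 1 by lia. apply sumR_split. Qed.

Lemma hdot_xpart u v : hdot n (xpart lam u) (xpart lam v) = sumR lam (fun i => u i * v i).
Proof.
  unfold hdot. rewrite sumR_split_lam, (sumR_ext (n - lam) _ (fun _ => 0 * 0)), sumR_scal.
  - rewrite Rmult_0_l, Rplus_0_r. apply sumR_ext. intros i Hi. unfold xpart.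
    replace (Nat.ltb i lam) with true; auto. symmetry; apply Nat.ltb_lt; lia.
  - intros j Hj. unfold xpart. replace (Nat.ltb (lam + j) lam) with false; auto.
    symmetry; apply Nat.ltb_ge; lia.
Qed.

Lemma hdot_ypart u v :
  hdot n (ypart lam u) (ypart lam v) = sumR (n - lam) (fun j => u (lam + j)%nat * v (lam + j)%nat).
Proof.
  unfold hdot. rewrite sumR_split_lam, (sumR_ext lam _ (fun _ => 0 * 0)), sumR_scal.
  - rewrite Rmult_0_l, Rplus_0_l. apply sumR_ext. intros i Hi. unfold ypart.
    replace (Nat.ltb (lam + i) lam) with false; auto. symmetry; apply Nat.ltb_ge; lia.
  - intros j Hj. unfold ypart. replace (Nat.ltb j lam) with true; auto.
    symmetry; apply Nat.ltb_lt; lia.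
Qed.

Lemma hdot_split_xy u v :
  hdot n u v = hdot n (xpart lam u) (xpart lam v) + hdot n (ypart lam u) (ypart lam v).
Proof. rewrite hdot_xpart, hdot_ypart. apply sumR_split_lam. Qed.

Lemma hdot_xrefl_split_xy u v :
  hdot n (xrefl lam u) v = hdot n (ypart lam u) (ypart lam v) - hdot n (xpart lam u) (xpart lam v).
Proof.
  rewrite hdot_split_xy.
  replace (xpart lam (xrefl lam u)) with (fun i => -1 * xpart lam u i).
  replace (ypart lam (xrefl lam u)) with (ypart lam u).
  - rewrite hdot_scall. ring.
  - apply functional_extensionality; intros i; unfold ypart, xrefl; destruct (Nat.ltb i lam); ring.
  - apply functional_extensionality; intros i; unfold xpart, xrefl; destruct (Nat.ltb i lam); ring.
Qed.

Lemma rho_eq p : rho lam p = sqrt (hdot n (xpart lam p) (xpart lam p)).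
Proof. unfold rho. rewrite hdot_xpart. f_equal. apply sumR_ext; intros; ring. Qed.

Lemma rr_eq p : rr n lam p = sqrt (hdot n (ypart lam p) (ypart lam p)).
Proof. unfold rr. rewrite hdot_ypart. f_equal. apply sumR_ext; intros; ring. Qed.

End Splitting.

Lemma hdot_xpart_ypart n lam u v : hdot n (xpart lam u) (ypart lam v) = 0.
Proof.
  unfold hdot. rewrite (sumR_ext n _ (fun _ => 0 * 0)), sumR_scal; [ring|].
  intros i _. unfold xpart, ypart. destruct (Nat.ltb i lam); ring.
Qed.

Lemma sqrt_gt1 zeta : 1 < zeta -> 1 < sqrt zeta.
Proof. intros H. rewrite <- sqrt_1. apply sqrt_lt_1_alt; lra. Qed.

Definition margin n lam zeta (z v : nat -> R) : R :=
  sqrt zeta * hdot n (xrefl lam z) v - nrm n z * nrm n v.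

(* [g(v,v) = 4 (|z|^2 |v|^2 - zeta <Jz,v>^2)] and [df(v) = 2 <Jz,v>], with [J = xrefl lam]. *)
Lemma fut_timelike_iff n lam zeta z v : 1 < zeta ->
  fut_timelike n lam zeta z v <-> 0 < margin n lam zeta z v.
Proof.
  intros Hz. unfold fut_timelike, gmet, margin.
  rewrite df_xrefl, !hdot_scall, !hdot_scalr, hdot_xrefl_xrefl, <- (nrm_sq n z), <- (nrm_sq n v).
  pose proof (sqrt_gt1 zeta Hz). pose proof (sqrt_sqrt zeta ltac:(lra)).
  pose proof (nrm_ge0 n z). pose proof (nrm_ge0 n v).
  set (a := hdot n (xrefl lam z) v) in *. set (N := nrm n z * nrm n v).
  replace (zeta * (2 * a) * (2 * a)) with (4 * (sqrt zeta * a) ^ 2)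
    by (transitivity (4 * (sqrt zeta * sqrt zeta) * a ^ 2); [|rewrite H0]; ring).
  assert (0 <= N) by (unfold N; nra).
  replace (nrm n v * nrm n v * (2 * (2 * (nrm n z * nrm n z)))) with (4 * N ^ 2) by (unfold N; ring).
  assert (Hpos : 0 < a <-> 0 < sqrt zeta * a)
    by (split; intros; [apply Rmult_lt_0_compat | apply (Rmult_lt_reg_l (sqrt zeta))]; lra).
  set (b := sqrt zeta * a) in *.
  split; [intros [Hg Hd] | intros Hm; split]; nra.
Qed.

Lemma margin_scalr n lam zeta d z v : 0 < d ->
  margin n lam zeta z (fun i => d * v i) = d * margin n lam zeta z v.
Proof. intros Hd. unfold margin. rewrite hdot_scalr, nrm_scal, Rabs_right by lra. ring. Qed.

Lemma margin_scal n lam zeta c d z v : 0 < c -> 0 < d ->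
  margin n lam zeta (fun i => c * z i) (fun i => d * v i) = c * d * margin n lam zeta z v.
Proof.
  intros Hc Hd. unfold margin.
  rewrite xrefl_scal, hdot_scall, hdot_scalr, !nrm_scal, !Rabs_right by lra. ring.
Qed.

Lemma hdot_pos_of_margin n lam zeta z v : 0 < margin n lam zeta z v -> 0 < hdot n z z.
Proof.
  unfold margin. intros H. destruct (Rle_lt_dec (hdot n z z) 0) as [Hle|]; auto.
  assert (N0 : nrm n z = 0).
  { unfold nrm. replace (hdot n z z) with 0 by (pose proof (hdot_ge0 n z); lra). apply sqrt_0. }
  pose proof (Rabs_hdot_le n (xrefl lam z) v) as HC. rewrite nrm_xrefl, N0 in HC.
  rewrite N0 in H. pose proof (Rabs_pos (hdot n (xrefl lam z) v)).
  assert (hdot n (xrefl lam z) v = 0) by (apply Rabs_eq_0; lra).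
  nra.
Qed.

Definition phiF n lam zeta (z : nat -> R) : R := sqrt zeta * hdot n (xrefl lam z) z - hdot n z z.
Definition phiP n lam zeta (z : nat -> R) : R := - sqrt zeta * hdot n (xrefl lam z) z - hdot n z z.

Section Slopes.
Variable zeta : R.
Hypothesis Hz : 1 < zeta.

Lemma m1_ge0 : 0 <= m1 zeta.
Proof.
  unfold m1. pose proof (sqrt_gt1 zeta Hz). pose proof (sqrt_lt_R0 (zeta - 1) ltac:(lra)).
  apply Rdiv_le_0_compat; lra.
Qed.

Lemma m2_ge0 : 0 <= m2 zeta.
Proof.
  unfold m2. pose proof (sqrt_gt1 zeta Hz). pose proof (sqrt_lt_R0 (zeta - 1) ltac:(lra)).
  apply Rdiv_le_0_compat; lra.
Qed.

Lemma slope_sq (e : R) : e * e = 1 ->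
  ((sqrt zeta + e) / sqrt (zeta - 1)) ^ 2 * (sqrt zeta - e) = sqrt zeta + e.
Proof.
  intros He. pose proof (sqrt_gt1 zeta Hz). pose proof (sqrt_lt_R0 (zeta - 1) ltac:(lra)).
  pose proof (sqrt_sqrt zeta ltac:(lra)). pose proof (sqrt_sqrt (zeta - 1) ltac:(lra)).
  unfold Rdiv. rewrite Rpow_mult_distr, pow_inv.
  replace (sqrt (zeta - 1) ^ 2) with ((sqrt zeta - e) * (sqrt zeta + e)) by nra.
  field. nra.
Qed.

Lemma m1_sq : m1 zeta ^ 2 * (sqrt zeta + 1) = sqrt zeta - 1.
Proof.
  unfold m1. replace (sqrt zeta - 1) with (sqrt zeta + -1) by ring.
  replace (sqrt zeta + 1) with (sqrt zeta - -1) by ring. apply slope_sq. ring.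
Qed.

Lemma m2_sq : m2 zeta ^ 2 * (sqrt zeta - 1) = sqrt zeta + 1.
Proof. apply slope_sq. ring. Qed.

End Slopes.

Lemma mul_sqrt m X : 0 <= m -> 0 <= X -> m * sqrt X = sqrt (m ^ 2 * X).
Proof. intros Hm HX. rewrite sqrt_mult_alt, sqrt_pow2 by (auto; apply pow2_ge_0). auto. Qed.

Section Regions.
Variables (n lam : nat) (eps zeta : R).
Hypothesis Hln : (lam <= n)%nat.
Hypothesis Hz : 1 < zeta.

Lemma phiF_split z : phiF n lam zeta z =
  (sqrt zeta - 1) * hdot n (ypart lam z) (ypart lam z) - (sqrt zeta + 1) * hdot n (xpart lam z) (xpart lam z).
Proof. unfold phiF. rewrite (hdot_xrefl_split_xy n lam Hln), (hdot_split_xy n lam Hln z z). ring. Qed.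

Lemma phiP_split z : phiP n lam zeta z =
  (sqrt zeta - 1) * hdot n (xpart lam z) (xpart lam z) - (sqrt zeta + 1) * hdot n (ypart lam z) (ypart lam z).
Proof. unfold phiP. rewrite (hdot_xrefl_split_xy n lam Hln), (hdot_split_xy n lam Hln z z). ring. Qed.

Let X z := hdot n (xpart lam z) (xpart lam z).
Let Y z := hdot n (ypart lam z) (ypart lam z).

Lemma phiP_pos_of_inP p : inP n lam eps zeta p -> 0 < phiP n lam zeta p.
Proof.
  intros [_ H]. rewrite (rr_eq n lam Hln), (rho_eq n lam Hln), mul_sqrt in H
    by (apply m1_ge0 || apply hdot_ge0; auto).
  apply sqrt_lt_0_alt in H. rewrite phiP_split. fold (X p) (Y p) in H |- *.
  pose proof (sqrt_gt1 zeta Hz).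
  assert ((sqrt zeta + 1) * (m1 zeta ^ 2 * X p) = (sqrt zeta - 1) * X p)
    by (rewrite <- (m1_sq zeta Hz); ring).
  assert ((sqrt zeta + 1) * Y p < (sqrt zeta + 1) * (m1 zeta ^ 2 * X p)) by (apply Rmult_lt_compat_l; lra).
  lra.
Qed.

Lemma phiF_pos_of_inF p : inF n lam eps zeta p -> 0 < phiF n lam zeta p.
Proof.
  intros [_ H]. rewrite (rr_eq n lam Hln), (rho_eq n lam Hln), mul_sqrt in H
    by (apply m2_ge0 || apply hdot_ge0; auto).
  apply sqrt_lt_0_alt in H. rewrite phiF_split. fold (X p) (Y p) in H |- *.
  pose proof (sqrt_gt1 zeta Hz).
  assert ((sqrt zeta - 1) * (m2 zeta ^ 2 * X p) = (sqrt zeta + 1) * X p)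
    by (rewrite <- (m2_sq zeta Hz); ring).
  assert ((sqrt zeta - 1) * (m2 zeta ^ 2 * X p) < (sqrt zeta - 1) * Y p) by (apply Rmult_lt_compat_l; lra).
  lra.
Qed.

Lemma phiF_eq0_of_inbdF q : inbdF n lam eps zeta q -> phiF n lam zeta q = 0.
Proof.
  intros [_ H]. rewrite (rr_eq n lam Hln), (rho_eq n lam Hln), mul_sqrt in H
    by (apply m2_ge0 || apply hdot_ge0; auto).
  apply sqrt_inj in H; try (apply hdot_ge0 || (apply Rmult_le_pos; [apply pow2_ge_0 | apply hdot_ge0])).
  rewrite phiF_split. fold (X q) (Y q) in H |- *. rewrite H, <- (m2_sq zeta Hz). ring.
Qed.

Lemma inF_of_phiF_pos p : inN n eps p -> 0 < phiF n lam zeta p -> inF n lam eps zeta p.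
Proof.
  intros HN H. split; auto. rewrite (rr_eq n lam Hln), (rho_eq n lam Hln), mul_sqrt
    by (apply m2_ge0 || apply hdot_ge0; auto).
  apply sqrt_lt_1; [apply Rmult_le_pos; [apply pow2_ge_0 | apply hdot_ge0] | apply hdot_ge0 |].
  rewrite phiF_split in H. fold (X p) (Y p) in H |- *.
  pose proof (sqrt_gt1 zeta Hz).
  assert ((sqrt zeta - 1) * (m2 zeta ^ 2 * X p) = (sqrt zeta + 1) * X p)
    by (rewrite <- (m2_sq zeta Hz); ring).
  apply (Rmult_lt_reg_l (sqrt zeta - 1)); lra.
Qed.

End Regions.

(** * Monotonicity of [phiF] along timelike curves *)

Lemma phiF_ext n lam zeta u v : (forall i, (i < n)%nat -> u i = v i) -> phiF n lam zeta u = phiF n lam zeta v.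
Proof.
  intros H. unfold phiF. rewrite (hdot_ext n u v u v H H).
  rewrite (hdot_ext n (xrefl lam u) (xrefl lam v) u v); auto.
  intros i Hi; unfold xrefl; rewrite H; auto.
Qed.

Lemma inN_ext n eps u v : (forall i, (i < n)%nat -> u i = v i) -> inN n eps u -> inN n eps v.
Proof. intros H. unfold inN. rewrite (hdot_ext n u v u v H H). auto. Qed.

Definition phiF_weight lam zeta (i : nat) : R := sqrt zeta * (if Nat.ltb i lam then -1 else 1) - 1.

Lemma phiF_weighted_sum n lam zeta z :
  phiF n lam zeta z = sumR n (fun i => phiF_weight lam zeta i * (z i * z i)).
Proof.
  unfold phiF, hdot.
  replace (sqrt zeta * _ - _) with
    (sqrt zeta * sumR n (fun i => xrefl lam z i * z i) + (-1) * sumR n (fun i => z i * z i)) by ring.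
  rewrite <- sumR_lin. apply sumR_ext; intros i _. unfold phiF_weight, xrefl. destruct (Nat.ltb i lam); ring.
Qed.

Lemma is_derive_sumR k (F dF : nat -> R -> R) t :
  (forall i, (i < k)%nat -> is_derive (F i) t (dF i t)) ->
  is_derive (fun s => sumR k (fun i => F i s)) t (sumR k (fun i => dF i t)).
Proof.
  induction k; intros H; simpl.
  - auto_derive; auto.
  - apply (is_derive_plus (fun s => sumR k (fun i => F i s)) (F k)).
    + apply IHk; intros; apply H; lia.
    + apply H; lia.
Qed.

Section PhiFMonotone.
Variables (n lam : nat) (zeta : R) (gamma : nat -> R -> R).
Hypothesis Hz : 1 < zeta.
Hypothesis Hd : forall i, (i < n)%nat -> forall t, ex_derive (gamma i) t.
Hypothesis HT : forall t, 0 <= t <= 1 ->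
  fut_timelike n lam zeta (fun i => gamma i t) (fun i => Derive (gamma i) t).

Let z t := fun i => gamma i t.
Let v t := fun i => Derive (gamma i) t.

Lemma phiF_curve_derive t : is_derive (fun s => phiF n lam zeta (z s)) t
  (2 * (sqrt zeta * hdot n (xrefl lam (z t)) (v t) - hdot n (z t) (v t))).
Proof.
  apply is_derive_ext with
    (fun s => sumR n (fun i => phiF_weight lam zeta i * (gamma i s * gamma i s))).
  { intros s. rewrite phiF_weighted_sum. auto. }
  replace (2 * (sqrt zeta * hdot n (xrefl lam (z t)) (v t) - hdot n (z t) (v t))) with
    (sumR n (fun i => phiF_weight lam zeta i * (2 * gamma i t * Derive (gamma i) t))).
  2:{ unfold hdot, z, v.
      replace (2 * (sqrt zeta * _ - _)) with
        (2 * sqrt zeta * sumR n (fun i => xrefl lam (fun i0 => gamma i0 t) i * Derive (gamma i) t)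
         + (-2) * sumR n (fun i => gamma i t * Derive (gamma i) t)) by ring.
      rewrite <- sumR_lin. apply sumR_ext; intros i _. unfold phiF_weight, xrefl.
      destruct (Nat.ltb i lam); ring. }
  apply (is_derive_sumR n
    (fun i s => phiF_weight lam zeta i * (gamma i s * gamma i s))
    (fun i s => phiF_weight lam zeta i * (2 * gamma i s * Derive (gamma i) s))).
  intros i Hi.
  destruct (Hd i Hi t) as [l Hl]. pose proof (is_derive_unique _ _ _ Hl) as HU.
  rewrite HU. auto_derive.
  - repeat split; apply (Hd i Hi).
  - change (fun x : R => gamma i x) with (gamma i). rewrite HU. ring.
Qed.

Lemma phiF_curve_increasing t1 t2 : 0 <= t1 -> t1 < t2 -> t2 <= 1 ->
  phiF n lam zeta (z t1) < phiF n lam zeta (z t2).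
Proof.
  intros H1 H2 H3.
  destruct (MVT_cor2 (fun s => phiF n lam zeta (z s))
    (fun t => 2 * (sqrt zeta * hdot n (xrefl lam (z t)) (v t) - hdot n (z t) (v t))) t1 t2 H2)
    as [c [Hc1 Hc2]].
  { intros c Hc. apply is_derive_Reals. apply phiF_curve_derive. }
  assert (0 < margin n lam zeta (z c) (v c)) by (apply fut_timelike_iff; auto; apply HT; lra).
  pose proof (hdot_le_nrm n (z c) (v c)). unfold margin in *. nra.
Qed.

End PhiFMonotone.

Section SignOfPhiF.
Variables (n lam : nat) (eps zeta : R).
Hypothesis Hln : (lam <= n)%nat.
Hypothesis Hz : 1 < zeta.

Lemma xpart_pos_of_phiF_neg z : phiF n lam zeta z < 0 -> 0 < hdot n (xpart lam z) (xpart lam z).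
Proof.
  rewrite (phiF_split n lam zeta Hln). pose proof (sqrt_gt1 zeta Hz).
  pose proof (hdot_ge0 n (ypart lam z)). pose proof (hdot_ge0 n (xpart lam z)). nra.
Qed.

Lemma xpart_pos_of_inbdF q : inbdF n lam eps zeta q -> 0 < hdot n (xpart lam q) (xpart lam q).
Proof.
  intros Hq. pose proof (phiF_eq0_of_inbdF n lam eps zeta Hln Hz q Hq) as H0.
  destruct Hq as [[HN _] _]. rewrite (phiF_split n lam zeta Hln) in H0.
  rewrite (hdot_split_xy n lam Hln) in HN. pose proof (sqrt_gt1 zeta Hz).
  pose proof (hdot_ge0 n (ypart lam q)). pose proof (hdot_ge0 n (xpart lam q)). nra.
Qed.

Lemma xpart_pos_of_inP p : inP n lam eps zeta p -> 0 < hdot n (xpart lam p) (xpart lam p).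
Proof.
  intros Hp. pose proof (phiP_pos_of_inP n lam eps zeta Hln Hz p Hp) as HP.
  rewrite (phiP_split n lam zeta Hln) in HP. pose proof (sqrt_gt1 zeta Hz).
  pose proof (hdot_ge0 n (ypart lam p)). pose proof (hdot_ge0 n (xpart lam p)). nra.
Qed.

Lemma inF_of_chron_from_bdF q p : inbdF n lam eps zeta q -> chron n lam eps zeta q p -> inF n lam eps zeta p.
Proof.
  intros Hq [g [Hd [_ [He [HN HT]]]]].
  pose proof (phiF_curve_increasing n lam zeta g Hz Hd HT 0 1 ltac:(lra) ltac:(lra) ltac:(lra)) as Hm.
  cbv beta in Hm. rewrite (phiF_ext n lam zeta (fun i => g i 0) q), (phiF_ext n lam zeta (fun i => g i 1) p),
    (phiF_eq0_of_inbdF n lam eps zeta Hln Hz q Hq) in Hm by (intros; apply He; auto).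
  apply inF_of_phiF_pos; auto.
  apply inN_ext with (fun i => g i 1); [intros; apply He; auto | apply HN; lra].
Qed.

End SignOfPhiF.

Lemma chron_to_bdF_same_side n eps zeta p q : (1 <= n)%nat -> 1 < zeta ->
  inbdF n 1 eps zeta q -> chron n 1 eps zeta p q -> ~ p 0%nat * q 0%nat < 0.
Proof.
  intros Hn Hz Hq [g [Hd [_ [He [_ HT]]]]] Hpq.
  assert (Hx : forall z, hdot n (xpart 1 z) (xpart 1 z) = z 0%nat * z 0%nat)
    by (intros z; rewrite hdot_xpart by auto; simpl; ring).
  assert (Hoff : forall t, 0 <= t < 1 -> g 0%nat t <> 0).
  { intros t Ht Hg0.
    pose proof (phiF_curve_increasing n 1 zeta g Hz Hd HT t 1 ltac:(lra) ltac:(lra) ltac:(lra)) as Hm.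
    cbv beta in Hm.
    rewrite (phiF_ext n 1 zeta (fun i => g i 1) q), (phiF_eq0_of_inbdF n 1 eps zeta Hn Hz q Hq) in Hm
      by (intros; apply He; auto).
    pose proof (xpart_pos_of_phiF_neg n 1 zeta Hn Hz _ Hm) as HX.
    rewrite Hx, Hg0 in HX. lra. }
  assert (Hcont : continuity (fun t => q 0%nat * g 0%nat t)).
  { assert (Hdq : forall t, ex_derive (fun t => q 0%nat * g 0%nat t) t)
      by (intros t; apply ex_derive_scal, Hd; lia).
    apply derivable_continuous. intros t. apply ex_derive_Reals_0, Hdq. }
  destruct (He 0%nat ltac:(lia)) as [E0 E1].
  destruct (IVT _ 0 1 Hcont ltac:(lra)) as [t [Ht Hzero]]; [rewrite E0; lra | rewrite E1; nra |].
  destruct (Req_dec t 1) as [->|Ht1]; [rewrite E1 in Hzero; nra|].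
  apply (Hoff t); [lra|]. apply Rmult_integral in Hzero. destruct Hzero as [Hq0|]; auto. rewrite Hq0 in Hpq. lra.
Qed.

Lemma chron_to_bdF_one_side n eps zeta q : (1 <= n)%nat -> 1 < zeta -> inbdF n 1 eps zeta q ->
  (forall p, inP2 n 1 eps zeta p -> ~ chron n 1 eps zeta p q) \/
  (forall p, inP1 n 1 eps zeta p -> ~ chron n 1 eps zeta p q).
Proof.
  intros Hn Hz Hq.
  assert (Hq0 : q 0%nat <> 0).
  { intros H0. pose proof (xpart_pos_of_inbdF n 1 eps zeta Hn Hz q Hq) as HX.
    rewrite hdot_xpart in HX by auto. simpl in HX. rewrite H0 in HX. lra. }
  destruct (Rlt_or_le 0 (q 0%nat)); [left | right]; intros p [_ Hp] Hc;
    apply (chron_to_bdF_same_side n eps zeta p q Hn Hz Hq Hc).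
  - nra.
  - assert (q 0%nat < 0) by lra. nra.
Qed.

(** * Timelike paths and their concatenation *)

Definition timelike_path n lam eps zeta (g dg : nat -> R -> R) : Prop :=
  (forall i t, is_derive (g i) t (dg i t)) /\
  (forall i t, continuous (dg i) t) /\
  (forall t, 0 <= t <= 1 -> inN n eps (fun i => g i t)) /\
  (forall t, 0 <= t <= 1 -> 0 < margin n lam zeta (fun i => g i t) (fun i => dg i t)).

Lemma chron_of_timelike_path n lam eps zeta a b g dg : 1 < zeta ->
  timelike_path n lam eps zeta g dg ->
  (forall i, (i < n)%nat -> g i 0 = a i /\ g i 1 = b i) -> chron n lam eps zeta a b.
Proof.
  intros Hz [Hd [Hc [HN HT]]] He.
  assert (HD : forall i, Derive (g i) = dg i).
  { intros i; apply functional_extensionality; intros t; apply is_derive_unique; auto. }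
  exists g. split; [|split; [|split; [|split]]].
  - intros j _ s. exists (dg j s). auto.
  - intros j _ s. rewrite HD. auto.
  - exact He.
  - exact HN.
  - intros s Hs. rewrite (functional_extensionality (fun i => Derive (g i) s) (fun i => dg i s))
      by (intros i; rewrite HD; auto).
    apply fut_timelike_iff; auto.
Qed.

Lemma locally_lt (t c : R) : t < c -> locally t (fun s => s < c).
Proof.
  intros H. assert (Hp : 0 < c - t) by lra. exists (mkposreal _ Hp). intros s Hs.
  apply Rabs_lt_between in Hs. simpl in Hs. unfold minus, plus, opp in Hs; simpl in Hs. lra.
Qed.

Lemma locally_gt (t c : R) : c < t -> locally t (fun s => c < s).
Proof.
  intros H. assert (Hp : 0 < t - c) by lra. exists (mkposreal _ Hp). intros s Hs.
  apply Rabs_lt_between in Hs. simpl in Hs. unfold minus, plus, opp in Hs; simpl in Hs. lra.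
Qed.

Definition join_at (c : R) (f g : R -> R) (t : R) : R := if Rle_dec t c then f t else g t.

Lemma join_at_left_loc c f g t : t < c -> locally t (fun s => join_at c f g s = f s).
Proof.
  intros H. eapply filter_imp; [|apply (locally_lt t c H)].
  intros s Hs. unfold join_at. destruct (Rle_dec s c); auto; lra.
Qed.

Lemma join_at_right_loc c f g t : c < t -> locally t (fun s => join_at c f g s = g s).
Proof.
  intros H. eapply filter_imp; [|apply (locally_gt t c H)].
  intros s Hs. unfold join_at. destruct (Rle_dec s c); auto; lra.
Qed.

Section JoinAt.
Variables (f g df dg : R -> R) (c : R).
Hypothesis Hf : forall t, is_derive f t (df t).
Hypothesis Hg : forall t, is_derive g t (dg t).
Hypothesis Hfg : f c = g c.
Hypothesis Hdfg : df c = dg c.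

Lemma is_derive_join_at t : is_derive (join_at c f g) t (join_at c df dg t).
Proof.
  destruct (Rtotal_order t c) as [Hlt | [-> | Hgt]].
  - apply is_derive_ext_loc with f; [apply filter_imp with (2 := join_at_left_loc c f g t Hlt); auto|].
    unfold join_at. destruct (Rle_dec t c); [auto | lra].
  - apply is_derive_Reals. unfold join_at at 2. destruct (Rle_dec c c) as [_|]; [|lra].
    intros eps Heps.
    destruct (proj1 (is_derive_Reals f c (df c)) (Hf c) eps Heps) as [d1 Hd1].
    destruct (proj1 (is_derive_Reals g c (dg c)) (Hg c) eps Heps) as [d2 Hd2].
    exists (mkposreal _ (Rmin_glb_lt _ _ _ (cond_pos d1) (cond_pos d2))). intros h Hh Hhd. simpl in Hhd.
    pose proof (Rmin_l d1 d2). pose proof (Rmin_r d1 d2).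
    unfold join_at. destruct (Rle_dec c c) as [_|]; [|lra].
    destruct (Rle_dec (c + h) c).
    + apply Hd1; auto; lra.
    + rewrite Hfg, Hdfg. apply Hd2; auto; lra.
  - apply is_derive_ext_loc with g; [apply filter_imp with (2 := join_at_right_loc c f g t Hgt); auto|].
    unfold join_at. destruct (Rle_dec t c); [lra | auto].
Qed.

Hypothesis Hcf : forall t, continuous df t.
Hypothesis Hcg : forall t, continuous dg t.

Lemma continuous_join_at t : continuous (join_at c df dg) t.
Proof.
  destruct (Rtotal_order t c) as [Hlt | [-> | Hgt]].
  - apply continuous_ext_loc with df; auto.
    apply filter_imp with (2 := join_at_left_loc c df dg t Hlt); auto.
  - apply continuity_pt_filterlim. intros eps Heps.
    destruct (proj2 (continuity_pt_filterlim df c) (Hcf c) eps Heps) as [d1 [Hd1 H1]].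
    destruct (proj2 (continuity_pt_filterlim dg c) (Hcg c) eps Heps) as [d2 [Hd2 H2]].
    exists (Rmin d1 d2). split; [apply Rmin_glb_lt; auto|].
    intros x [Hdx Hx]. simpl in Hx |- *. unfold R_dist in Hx.
    pose proof (Rmin_l d1 d2). pose proof (Rmin_r d1 d2).
    unfold join_at. destruct (Rle_dec c c) as [_|]; [|lra]. destruct (Rle_dec x c).
    + apply H1. split; [exact Hdx|]. simpl; unfold R_dist; lra.
    + rewrite Hdfg. apply H2. split; [exact Hdx|]. simpl; unfold R_dist; lra.
  - apply continuous_ext_loc with dg; auto.
    apply filter_imp with (2 := join_at_right_loc c df dg t Hgt); auto.
Qed.

End JoinAt.

Lemma is_derive_affine_reparam (G dG : R -> R) s r t : (forall x, is_derive G x (dG x)) ->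
  is_derive (fun t => G ((t - s) * r)) t (r * dG ((t - s) * r)).
Proof.
  intros H. apply (is_derive_comp G (fun t => (t - s) * r)); [apply H|].
  auto_derive; [auto | ring].
Qed.

Lemma continuous_affine_reparam (D : R -> R) s r t : (forall x, continuous D x) ->
  continuous (fun t => r * D ((t - s) * r)) t.
Proof.
  intros H. apply (continuous_scal_r r (fun t => D ((t - s) * r))).
  apply continuous_comp; [|apply H]. apply (ex_derive_continuous (fun t => (t - s) * r)).
  auto_derive; auto.
Qed.

Lemma timelike_path_glue n lam eps zeta g1 dg1 g2 dg2 k : 0 < k ->
  timelike_path n lam eps zeta g1 dg1 -> timelike_path n lam eps zeta g2 dg2 ->
  (forall i, g1 i 1 = g2 i 0) -> (forall i, dg2 i 0 = k * dg1 i 1) ->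
  exists g dg, timelike_path n lam eps zeta g dg /\ forall i, g i 0 = g1 i 0 /\ g i 1 = g2 i 1.
Proof.
  intros Hk [D1 [C1 [N1 T1]]] [D2 [C2 [N2 T2]]] J0 J1.
  (* the junction time [tau] is chosen so that the two rescaled velocities agree there *)
  set (tau := 1 / (1 + k)). set (r1 := 1 + k). set (r2 := (1 + k) / k).
  assert (Ht : 0 < tau < 1).
  { unfold tau. split; [apply Rdiv_lt_0_compat; lra|].
    apply (Rmult_lt_reg_r (1 + k)); [lra|]. field_simplify; lra. }
  assert (Hr1 : 0 < r1) by (unfold r1; lra).
  assert (Hr2 : 0 < r2) by (unfold r2; apply Rdiv_lt_0_compat; lra).
  assert (Hm1 : (tau - 0) * r1 = 1) by (unfold tau, r1; field; lra).
  assert (Hm2 : (tau - tau) * r2 = 0) by ring.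
  assert (Hm3 : (1 - tau) * r2 = 1) by (unfold tau, r2; field; lra).
  assert (Hv : forall i, r1 * dg1 i 1 = r2 * dg2 i 0) by (intros i; rewrite J1; unfold r1, r2; field; lra).
  assert (Hin1 : forall t, 0 <= t <= tau -> 0 <= (t - 0) * r1 <= 1).
  { intros t H. rewrite <- Hm1. split; [apply Rmult_le_pos | apply Rmult_le_compat_r]; lra. }
  assert (Hin2 : forall t, tau < t <= 1 -> 0 <= (t - tau) * r2 <= 1).
  { intros t H. rewrite <- Hm3. split; [apply Rmult_le_pos | apply Rmult_le_compat_r]; lra. }
  exists (fun i => join_at tau (fun t => g1 i ((t - 0) * r1)) (fun t => g2 i ((t - tau) * r2))),
         (fun i => join_at tau (fun t => r1 * dg1 i ((t - 0) * r1)) (fun t => r2 * dg2 i ((t - tau) * r2))).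
  split; [split; [|split; [|split]] |].
  - intros i t. apply is_derive_join_at; try (intros; apply is_derive_affine_reparam; auto).
    + rewrite Hm1, Hm2. auto.
    + rewrite Hm1, Hm2. auto.
  - intros i t. apply continuous_join_at; try (intros; apply continuous_affine_reparam; auto).
    rewrite Hm1, Hm2. auto.
  - intros t Ht'. unfold join_at. destruct (Rle_dec t tau); [apply N1, Hin1 | apply N2, Hin2]; lra.
  - intros t Ht'. unfold join_at. destruct (Rle_dec t tau); rewrite margin_scalr by auto;
      apply Rmult_lt_0_compat; auto; [apply T1, Hin1 | apply T2, Hin2]; lra.
  - intros i. unfold join_at. split.
    + destruct (Rle_dec 0 tau); [|lra]. f_equal. ring.
    + destruct (Rle_dec 1 tau); [lra|]. rewrite Hm3. auto.
Qed.

(** * Timelike curves from [P] to [F] *)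

(* Along [a p + b q] with velocity [-(a+1) p + (b+1) q], the part [-a p + b q] of the velocity
   contributes [a^2 phiP p + b^2 phiF q] to the margin and the rest, [q - p], is an error term. *)
Lemma margin_segment_ge n lam zeta p q a b : 1 < zeta -> 0 <= a -> 0 <= b ->
  a ^ 2 * phiP n lam zeta p + b ^ 2 * phiF n lam zeta q
    - (sqrt zeta + 1) * (a * nrm n p + b * nrm n q) * nrm n (fun i => q i - p i)
  <= margin n lam zeta (fun i => a * p i + b * q i) (fun i => -(a + 1) * p i + (b + 1) * q i).
Proof.
  intros Hz Ha Hb.
  set (g := fun i => a * p i + b * q i).
  set (v0 := fun i => -a * p i + b * q i).
  set (e := fun i => q i - p i).
  replace (fun i => -(a + 1) * p i + (b + 1) * q i) with (fun i => v0 i + e i)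
    by (apply functional_extensionality; intros i; unfold v0, e; ring).
  unfold margin. rewrite hdot_addr.
  assert (HJ : hdot n (xrefl lam g) v0 = a * a * (- hdot n (xrefl lam p) p) + b * b * hdot n (xrefl lam q) q).
  { unfold g, v0. rewrite xrefl_lin, hdot_linl, !hdot_linr, (hdot_xrefl_sym n lam q p),
      (hdot_sym n q (xrefl lam p)). ring. }
  assert (Hgv : nrm n g * nrm n v0 <= a * a * hdot n p p + b * b * hdot n q q).
  { (* [|g|^2 |v0|^2 = (A + B)^2 - (2 a b <p,q>)^2] with [A, B] the squared norms of [a p], [b q] *)
    assert (Hgg : hdot n g g = a * a * hdot n p p + 2 * a * b * hdot n p q + b * b * hdot n q q)
      by (unfold g; rewrite hdot_linl, !hdot_linr, (hdot_sym n q p); ring).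
    assert (Hvv : hdot n v0 v0 = a * a * hdot n p p - 2 * a * b * hdot n p q + b * b * hdot n q q)
      by (unfold v0; rewrite hdot_linl, !hdot_linr, (hdot_sym n q p); ring).
    pose proof (hdot_ge0 n p). pose proof (hdot_ge0 n q).
    pose proof (nrm_ge0 n g). pose proof (nrm_ge0 n v0). pose proof (nrm_sq n g). pose proof (nrm_sq n v0).
    apply Rsqr_incr_0_var; [unfold Rsqr | nra].
    replace (nrm n g * nrm n v0 * (nrm n g * nrm n v0)) with (hdot n g g * hdot n v0 v0) by nra.
    rewrite Hgg, Hvv. nra. }
  assert (HE : - (nrm n g * nrm n e) <= hdot n (xrefl lam g) e).
  { pose proof (Rabs_hdot_le n (xrefl lam g) e) as HC. rewrite nrm_xrefl in HC.
    pose proof (Rle_abs (- hdot n (xrefl lam g) e)) as HA. rewrite Rabs_Ropp in HA. lra. }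
  pose proof (nrm_triangle n v0 e).
  assert (Hg : nrm n g <= a * nrm n p + b * nrm n q) by (apply nrm_lin_le; auto).
  pose proof (nrm_ge0 n g). pose proof (nrm_ge0 n e). pose proof (nrm_ge0 n v0).
  pose proof (sqrt_gt1 zeta Hz).
  assert (nrm n g * nrm n e <= (a * nrm n p + b * nrm n q) * nrm n e)
    by (apply Rmult_le_compat_r; auto).
  assert (nrm n g * nrm n (fun i => v0 i + e i) <= nrm n g * (nrm n v0 + nrm n e))
    by (apply Rmult_le_compat_l; auto).
  assert (- (sqrt zeta * (nrm n g * nrm n e)) <= sqrt zeta * hdot n (xrefl lam g) e)
    by (rewrite Ropp_mult_distr_r; apply Rmult_le_compat_l; lra).
  assert ((sqrt zeta + 1) * (nrm n g * nrm n e) <= (sqrt zeta + 1) * ((a * nrm n p + b * nrm n q) * nrm n e))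
    by (apply Rmult_le_compat_l; lra).
  unfold phiP, phiF. rewrite HJ. lra.
Qed.

Lemma sum_gt_of_prod_gt a b M : 0 <= a -> 0 <= b -> 0 <= M ->
  (M + 1) ^ 2 < (a + 1) * (b + 1) -> 2 * M < a + b.
Proof.
  intros Ha Hb HM H.
  assert (Hsq : (2 * (M + 1)) ^ 2 < (a + b + 2) ^ 2).
  { pose proof (pow2_ge_0 (a - b)). nra. }
  destruct (Rlt_or_le (2 * M) (a + b)) as [|Hle]; auto.
  assert ((a + b + 2) ^ 2 <= (2 * (M + 1)) ^ 2) by (apply pow_incr; lra). lra.
Qed.

Definition exp_segment (p q : nat -> R) (K : R) (i : nat) (t : R) : R :=
  (exp (K * (1 - t)) - 1) / (exp K - 1) * p i + (exp (K * t) - 1) / (exp K - 1) * q i.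
Definition exp_segment_velocity (p q : nat -> R) (K : R) (i : nat) (t : R) : R :=
  - K * exp (K * (1 - t)) / (exp K - 1) * p i + K * exp (K * t) / (exp K - 1) * q i.

Section SegmentPath.
Variables (n lam : nat) (eps zeta : R) (p q : nat -> R).
Hypothesis Hln : (lam <= n)%nat.
Hypothesis Hz : 1 < zeta.
Hypothesis Heps : 0 < eps.
Hypothesis Hp : inP n lam eps zeta p.
Hypothesis Hq : inF n lam eps zeta q.

Let m := Rmin (phiP n lam zeta p) (phiF n lam zeta q).
Let C := (sqrt zeta + 1) * (nrm n p + nrm n q) * nrm n (fun i => q i - p i).

Lemma segment_min_pos : 0 < m.
Proof.
  apply Rmin_glb_lt; [apply (phiP_pos_of_inP n lam eps) | apply (phiF_pos_of_inF n lam eps)]; auto.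
Qed.

Lemma segment_error_ge0 : 0 <= C.
Proof.
  pose proof (sqrt_gt1 zeta Hz). pose proof (nrm_ge0 n p). pose proof (nrm_ge0 n q).
  pose proof (nrm_ge0 n (fun i => q i - p i)). unfold C.
  apply Rmult_le_pos; [apply Rmult_le_pos|]; lra.
Qed.

Lemma margin_segment_pos a b : 0 <= a -> 0 <= b -> 2 * (C / m) < a + b ->
  0 < margin n lam zeta (fun i => a * p i + b * q i) (fun i => -(a + 1) * p i + (b + 1) * q i).
Proof.
  intros Ha Hb Hab. eapply Rlt_le_trans; [|apply margin_segment_ge; auto].
  pose proof segment_min_pos. pose proof segment_error_ge0. pose proof (sqrt_gt1 zeta Hz).
  pose proof (nrm_ge0 n p). pose proof (nrm_ge0 n q). pose proof (nrm_ge0 n (fun i => q i - p i)).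
  assert (Hm : m * (a ^ 2 + b ^ 2) <= a ^ 2 * phiP n lam zeta p + b ^ 2 * phiF n lam zeta q).
  { pose proof (Rmin_l (phiP n lam zeta p) (phiF n lam zeta q)) as Hmp.
    pose proof (Rmin_r (phiP n lam zeta p) (phiF n lam zeta q)) as Hmq. fold m in Hmp, Hmq.
    pose proof (pow2_ge_0 a). pose proof (pow2_ge_0 b). nra. }
  assert (HC : (sqrt zeta + 1) * (a * nrm n p + b * nrm n q) * nrm n (fun i => q i - p i) <= C * (a + b)).
  { unfold C. assert (a * nrm n p + b * nrm n q <= (a + b) * (nrm n p + nrm n q)) by nra.
    replace ((sqrt zeta + 1) * (nrm n p + nrm n q) * nrm n (fun i => q i - p i) * (a + b)) with
      ((sqrt zeta + 1) * ((a + b) * (nrm n p + nrm n q)) * nrm n (fun i => q i - p i)) by ring.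
    apply Rmult_le_compat_r; auto. apply Rmult_le_compat_l; lra. }
  assert (Hq2 : C * (a + b) < m * (a + b) ^ 2 / 2).
  { replace (C * (a + b)) with (m * (a + b) * (C / m)) by (field; lra).
    replace (m * (a + b) ^ 2 / 2) with (m * (a + b) * ((a + b) / 2)) by field.
    apply Rmult_lt_compat_l; [|lra]. apply Rmult_lt_0_compat; [lra|].
    pose proof (Rdiv_le_0_compat C m ltac:(lra) ltac:(lra)). lra. }
  assert (m * (a + b) ^ 2 / 2 <= m * (a ^ 2 + b ^ 2)).
  { pose proof (pow2_ge_0 (a - b)). nra. }
  lra.
Qed.

Let K := ln ((C / m + 1) ^ 2 + 1).

Lemma exp_segment_rate : exp K = (C / m + 1) ^ 2 + 1.
Proof. unfold K. apply exp_ln. pose proof (pow2_ge_0 (C / m + 1)). lra. Qed.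

Lemma segment_rate_pos : 0 < K.
Proof.
  unfold K. rewrite <- ln_1. apply ln_increasing; [lra|].
  pose proof (Rdiv_le_0_compat C m segment_error_ge0 ltac:(pose proof segment_min_pos; lra)).
  assert (0 < (C / m + 1) ^ 2) by (apply pow_lt; lra). lra.
Qed.

Lemma exp_segment_rate_gt1 : 1 < exp K.
Proof. rewrite <- exp_0. apply exp_increasing. apply segment_rate_pos. Qed.

Lemma exp_segment_weights t : 0 <= t <= 1 -> exists a b, 0 <= a /\ 0 <= b /\
  2 * (C / m) < a + b /\ a + b <= exp K - 1 /\
  (fun i => exp_segment p q K i t) = (fun i => 1 / (exp K - 1) * (fun i => a * p i + b * q i) i) /\
  (fun i => exp_segment_velocity p q K i t) =
    (fun i => K / (exp K - 1) * (fun i => -(a + 1) * p i + (b + 1) * q i) i).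
Proof.
  intros Ht. pose proof exp_segment_rate_gt1. pose proof segment_rate_pos.
  assert (HU : 1 <= exp (K * (1 - t))) by (pose proof (exp_ineq1_le (K * (1 - t))); nra).
  assert (HT : 1 <= exp (K * t)) by (pose proof (exp_ineq1_le (K * t)); nra).
  assert (HUT : exp (K * (1 - t)) * exp (K * t) = exp K) by (rewrite <- exp_plus; f_equal; ring).
  exists (exp (K * (1 - t)) - 1), (exp (K * t) - 1).
  split; [lra | split; [lra | split; [|split; [|split]]]].
  - apply sum_gt_of_prod_gt; try lra.
    + apply Rdiv_le_0_compat; [apply segment_error_ge0 | pose proof segment_min_pos; lra].
    + replace (exp (K * (1 - t)) - 1 + 1) with (exp (K * (1 - t))) by ring.
      replace (exp (K * t) - 1 + 1) with (exp (K * t)) by ring. rewrite HUT, exp_segment_rate. lra.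
  - nra.
  - apply functional_extensionality; intros i. unfold exp_segment. field. lra.
  - apply functional_extensionality; intros i. unfold exp_segment_velocity. field. lra.
Qed.

Lemma exp_segment_timelike : timelike_path n lam eps zeta (exp_segment p q K) (exp_segment_velocity p q K).
Proof.
  pose proof exp_segment_rate_gt1. pose proof segment_rate_pos.
  assert (Hpe : nrm n p < eps) by (destruct Hp as [[_ H1] _]; apply nrm_lt_of_hdot; simpl in H1; lra).
  assert (Hqe : nrm n q < eps) by (destruct Hq as [[_ H1] _]; apply nrm_lt_of_hdot; simpl in H1; lra).
  split; [|split; [|split]].
  - intros i t. unfold exp_segment, exp_segment_velocity. auto_derive; [auto|]. unfold Rminus. field. lra.
  - intros i t. apply (ex_derive_continuous (K := R_AbsRing) (V := R_NormedModule)).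
    unfold exp_segment_velocity. auto_derive. auto.
  - intros t Ht. destruct (exp_segment_weights t Ht) as (a & b & Ha & Hb & Hab & Hsum & Eg & Ev).
    pose proof (margin_segment_pos a b Ha Hb Hab).
    assert (H2C : 0 <= 2 * (C / m)) by (pose proof segment_error_ge0; pose proof segment_min_pos;
      assert (0 <= C / m) by (apply Rdiv_le_0_compat; lra); lra).
    split.
    + apply (hdot_pos_of_margin n lam zeta _ (fun i => exp_segment_velocity p q K i t)).
      rewrite Eg, Ev, margin_scal by (apply Rdiv_lt_0_compat; lra).
      apply Rmult_lt_0_compat; auto. apply Rmult_lt_0_compat; apply Rdiv_lt_0_compat; lra.
    + replace (eps ^ 2) with (eps * eps) by ring. apply hdot_lt_of_nrm.
      rewrite Eg, nrm_scal, Rabs_right by (apply Rle_ge, Rdiv_le_0_compat; lra).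
      pose proof (nrm_lin_le n a b p q Ha Hb).
      assert (a * nrm n p + b * nrm n q < (a + b) * eps).
      { destruct (Rlt_or_le 0 a); nra. }
      apply (Rmult_lt_reg_l (exp K - 1)); [lra|].
      replace ((exp K - 1) * (1 / (exp K - 1) * nrm n (fun i => a * p i + b * q i)))
        with (nrm n (fun i => a * p i + b * q i)) by (field; lra).
      nra.
  - intros t Ht. destruct (exp_segment_weights t Ht) as (a & b & Ha & Hb & Hab & Hsum & Eg & Ev).
    rewrite Eg, Ev. rewrite margin_scal by (apply Rdiv_lt_0_compat; lra).
    apply Rmult_lt_0_compat; [apply Rmult_lt_0_compat; apply Rdiv_lt_0_compat; lra|].
    apply margin_segment_pos; auto.
Qed.

Lemma chron_of_inP_inF : chron n lam eps zeta p q.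
Proof.
  apply (chron_of_timelike_path n lam eps zeta p q _ _ Hz exp_segment_timelike).
  pose proof exp_segment_rate_gt1. intros i _. unfold exp_segment. split.
  - rewrite Rminus_0_r, Rmult_1_r, Rmult_0_r, exp_0. field. lra.
  - rewrite Rminus_diag, Rmult_0_r, Rmult_1_r, exp_0. field. lra.
Qed.

End SegmentPath.

(** * Timelike curves from [P] to the boundary of [F] *)

Definition in_xspace (lam : nat) (v : nat -> R) : Prop := forall i, (lam <= i)%nat -> v i = 0.

Lemma xpart_in_xspace lam u : in_xspace lam (xpart lam u).
Proof. intros i Hi. unfold xpart. replace (Nat.ltb i lam) with false; auto. symmetry; apply Nat.ltb_ge; auto. Qed.

Lemma hdot_xspace_ypart n lam v u : in_xspace lam v -> hdot n v (ypart lam u) = 0.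
Proof.
  intros Hv. unfold hdot. rewrite (sumR_ext n _ (fun _ => 0 * 0)), sumR_scal; [ring|].
  intros i _. unfold ypart. destruct (Nat.ltb_spec i lam); [ring|]. rewrite Hv by lia. ring.
Qed.

Lemma hdot_first_two n u v : (2 <= n)%nat -> in_xspace 2 u ->
  hdot n u v = u 0%nat * v 0%nat + u 1%nat * v 1%nat.
Proof.
  intros Hn Hu. unfold hdot. induction n as [|k IH]; [lia|].
  destruct (Nat.eq_dec k 1) as [->|Hk]; [simpl; ring|].
  simpl. rewrite IH, (Hu k) by lia. ring.
Qed.

Section XRotation.
Variables (n lam : nat).
Hypothesis Hln : (lam <= n)%nat.
Hypothesis Hl2 : (2 <= lam)%nat.

Lemma xspace_orthogonal_exists A : in_xspace lam A ->
  exists E, in_xspace lam E /\ hdot n A E = 0 /\ 0 < hdot n E E.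
Proof.
  intros HA.
  assert (Hx2 : forall E, in_xspace 2 E -> in_xspace lam E) by (intros E HE i Hi; apply HE; lia).
  destruct (Req_dec (A 0%nat ^ 2 + A 1%nat ^ 2) 0) as [H0|H0].
  - assert (A 0%nat = 0) by nra.
    exists (fun i => if Nat.eqb i 0 then 1 else 0).
    assert (HE : in_xspace 2 (fun i => if Nat.eqb i 0 then 1 else 0))
      by (intros i Hi; destruct (Nat.eqb_spec i 0); [lia | auto]).
    split; [auto|]. rewrite !(hdot_sym n A), !hdot_first_two by (auto; lia). simpl. split; lra.
  - exists (fun i => if Nat.eqb i 0 then A 1%nat else if Nat.eqb i 1 then - A 0%nat else 0).
    assert (HE : in_xspace 2 (fun i => if Nat.eqb i 0 then A 1%nat else if Nat.eqb i 1 then - A 0%nat else 0))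
      by (intros i Hi; destruct (Nat.eqb_spec i 0); [lia|]; destruct (Nat.eqb_spec i 1); [lia | auto]).
    split; [auto|]. rewrite !(hdot_sym n A), !hdot_first_two by (auto; lia). simpl.
    split; [ring | nra].
Qed.

Lemma xspace_orthogonal_rescale A D s : in_xspace lam A -> in_xspace lam D -> 0 < hdot n A A -> 0 <= s ->
  hdot n A D = 0 -> hdot n D D = s * s * hdot n A A ->
  exists B, in_xspace lam B /\ hdot n A B = 0 /\ hdot n B B = hdot n A A /\ forall i, s * B i = D i.
Proof.
  intros HAx HDx HA Hs HAD HDD.
  destruct (Req_dec s 0) as [Hs0|Hs0].
  - assert (HD0 : forall i, D i = 0).
    { intros i. destruct (Nat.lt_ge_cases i n) as [Hi|Hi]; [|apply HDx; lia].
      assert (H0 : hdot n D D = 0) by (rewrite HDD, Hs0; ring).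
      pose proof (sumR_eq0_nonneg n (fun i => D i * D i) ltac:(intros; nra) H0 i Hi). nra. }
    destruct (xspace_orthogonal_exists A HAx) as [E [HEx [HAE HEE]]].
    assert (HrE : 0 < nrm n E) by (apply sqrt_lt_R0; auto).
    assert (HrA : 0 < nrm n A) by (apply sqrt_lt_R0; auto).
    exists (fun i => nrm n A / nrm n E * E i). split; [|split; [|split]].
    + intros i Hi. rewrite HEx by auto. ring.
    + rewrite hdot_scalr, HAE. ring.
    + rewrite hdot_scall, hdot_scalr, <- (nrm_sq n E), <- (nrm_sq n A). field. lra.
    + intros i. rewrite Hs0, HD0. ring.
  - exists (fun i => 1 / s * D i). split; [|split; [|split]].
    + intros i Hi. rewrite HDx by auto. ring.
    + rewrite hdot_scalr, HAD. ring.
    + rewrite hdot_scall, hdot_scalr, HDD. field. lra.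
    + intros i. field. lra.
Qed.

Lemma xspace_rotation A Q : in_xspace lam A -> in_xspace lam Q -> 0 < hdot n A A -> 0 < hdot n Q Q ->
  exists B Th, in_xspace lam B /\ hdot n A B = 0 /\ hdot n B B = hdot n A A /\ 0 <= Th <= PI /\
    forall i, cos Th * A i + sin Th * B i = nrm n A / nrm n Q * Q i.
Proof.
  intros HAx HQx HA HQ.
  set (rA := nrm n A). set (rQ := nrm n Q).
  assert (HrA : 0 < rA) by (apply sqrt_lt_R0; auto).
  assert (HrQ : 0 < rQ) by (apply sqrt_lt_R0; auto).
  assert (ErA : rA * rA = hdot n A A) by apply nrm_sq.
  assert (ErQ : rQ * rQ = hdot n Q Q) by apply nrm_sq.
  set (c := hdot n A Q / (rA * rQ)).
  assert (Hc : -1 <= c <= 1).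
  { pose proof (Rabs_hdot_le n A Q) as HC. fold rA rQ in HC. unfold c.
    apply Rabs_le_between. rewrite Rabs_div, (Rabs_right (rA * rQ)) by nra.
    apply Rmult_le_reg_r with (rA * rQ); [nra|]. unfold Rdiv. rewrite Rmult_assoc, Rinv_l by nra. lra. }
  set (D := fun i => rA / rQ * Q i + (- c) * A i).
  assert (HDx : in_xspace lam D) by (intros i Hi; unfold D; rewrite HAx, HQx by auto; ring).
  assert (HAQ : hdot n A Q = c * (rA * rQ)) by (unfold c; field; nra).
  assert (HAD : hdot n A D = 0) by (unfold D; rewrite hdot_linr, HAQ, <- ErA; field; lra).
  assert (HDD : hdot n D D = rA * rA * (1 - c * c)).
  { unfold D. rewrite hdot_linl, !hdot_linr, (hdot_sym n Q A), HAQ, <- ErA, <- ErQ. field. lra. }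
  assert (Hs : 0 <= sqrt (1 - c * c)) by apply sqrt_pos.
  destruct (xspace_orthogonal_rescale A D (sqrt (1 - c * c)) HAx HDx HA Hs HAD) as [B (HBx & HAB & HBB & HBD)].
  { rewrite HDD, sqrt_sqrt, <- ErA by nra. ring. }
  exists B, (acos c). split; [|split; [|split; [|split]]]; auto.
  - apply acos_bound.
  - intros i. rewrite cos_acos, sin_acos, HBD by auto. unfold D. ring.
Qed.

End XRotation.

Lemma ex_derive_sqrt y : 0 < y -> ex_derive sqrt y.
Proof. intros H. exists (/ (2 * sqrt y)). apply is_derive_Reals, derivable_pt_lim_sqrt, H. Qed.

(* Real and imaginary parts of the principal square root of a curve [w = u1 + i u2] that avoids
   the closed negative real axis, and of its derivative. *)
Section ComplexSqrt.
Variables (u1 u2 du1 du2 : R -> R).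
Hypothesis Hu1 : forall t, is_derive u1 t (du1 t).
Hypothesis Hu2 : forall t, is_derive u2 t (du2 t).
Hypothesis Hcut : forall t, u2 t <> 0 \/ 0 < u1 t.

Definition cmod t := sqrt (u1 t * u1 t + u2 t * u2 t).
Definition csqrt_re t := sqrt ((cmod t + u1 t) / 2).
Definition csqrt_im t := u2 t / (2 * csqrt_re t).
Definition csqrt_re' t := (csqrt_re t * du1 t + csqrt_im t * du2 t) / (2 * cmod t).
Definition csqrt_im' t := (csqrt_re t * du2 t - csqrt_im t * du1 t) / (2 * cmod t).

Lemma cmod_sq t : cmod t * cmod t = u1 t * u1 t + u2 t * u2 t.
Proof. apply sqrt_sqrt. nra. Qed.

Lemma cmod_add_re_pos t : 0 < cmod t + u1 t.
Proof.
  pose proof (sqrt_pos (u1 t * u1 t + u2 t * u2 t)) as Hm. fold (cmod t) in Hm.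
  destruct (Hcut t) as [Hne|Hpos]; [|lra].
  assert (Rabs (u1 t) < cmod t).
  { rewrite <- sqrt_Rsqr_abs. apply sqrt_lt_1_alt. unfold Rsqr.
    split; [nra|]. assert (0 < u2 t * u2 t) by (apply Rsqr_pos_lt; auto). lra. }
  pose proof (Rle_abs (- u1 t)) as Ha. rewrite Rabs_Ropp in Ha. lra.
Qed.

Lemma csqrt_re_pos t : 0 < csqrt_re t.
Proof. apply sqrt_lt_R0. pose proof (cmod_add_re_pos t). lra. Qed.

Lemma csqrt_re_sq t : csqrt_re t * csqrt_re t = (cmod t + u1 t) / 2.
Proof. apply sqrt_sqrt. pose proof (cmod_add_re_pos t). lra. Qed.

Lemma csqrt_im_sq t : csqrt_im t * csqrt_im t = (cmod t - u1 t) / 2.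
Proof.
  unfold csqrt_im. pose proof (csqrt_re_pos t). pose proof (cmod_add_re_pos t).
  replace (u2 t / (2 * csqrt_re t) * (u2 t / (2 * csqrt_re t))) with
    (u2 t * u2 t / (4 * (csqrt_re t * csqrt_re t))) by (field; lra).
  rewrite csqrt_re_sq. replace (u2 t * u2 t) with (cmod t * cmod t - u1 t * u1 t) by (rewrite cmod_sq; ring).
  field. lra.
Qed.

Lemma csqrt_sq_re t : u1 t = csqrt_re t * csqrt_re t - csqrt_im t * csqrt_im t.
Proof. rewrite csqrt_re_sq, csqrt_im_sq. field. Qed.

Lemma csqrt_sq_im t : u2 t = 2 * csqrt_re t * csqrt_im t.
Proof. unfold csqrt_im. pose proof (csqrt_re_pos t). field. lra. Qed.

Lemma csqrt_abs t : csqrt_re t * csqrt_re t + csqrt_im t * csqrt_im t = cmod t.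
Proof. rewrite csqrt_re_sq, csqrt_im_sq. field. Qed.

Lemma cmod_pos t : 0 < cmod t.
Proof. rewrite <- csqrt_abs. pose proof (csqrt_re_pos t). nra. Qed.

Lemma ex_derive_cmod t : ex_derive cmod t.
Proof.
  unfold cmod. apply (ex_derive_comp sqrt (fun t => u1 t * u1 t + u2 t * u2 t)).
  - apply ex_derive_sqrt. rewrite <- cmod_sq. pose proof (cmod_pos t). nra.
  - auto_derive. repeat split; eexists; eauto.
Qed.

Lemma ex_derive_csqrt_re t : ex_derive csqrt_re t.
Proof.
  unfold csqrt_re. apply (ex_derive_comp sqrt (fun t => (cmod t + u1 t) / 2)).
  - apply ex_derive_sqrt. pose proof (cmod_add_re_pos t). lra.
  - auto_derive. repeat split; [apply ex_derive_cmod | eexists; eauto].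
Qed.

Lemma ex_derive_csqrt_im t : ex_derive csqrt_im t.
Proof.
  unfold csqrt_im. auto_derive. pose proof (csqrt_re_pos t).
  repeat split; [eexists; eauto | apply ex_derive_csqrt_re | lra].
Qed.

(* Differentiate [re^2 - im^2 = u1] and [2 re im = u2] and solve the resulting linear system. *)
Lemma is_derive_csqrt t :
  is_derive csqrt_re t (csqrt_re' t) /\ is_derive csqrt_im t (csqrt_im' t).
Proof.
  set (x := csqrt_re t). set (y := csqrt_im t).
  set (dx := Derive csqrt_re t). set (dy := Derive csqrt_im t).
  assert (Hdx : is_derive csqrt_re t dx) by (apply Derive_correct, ex_derive_csqrt_re).
  assert (Hdy : is_derive csqrt_im t dy) by (apply Derive_correct, ex_derive_csqrt_im).
  assert (H1 : 2 * x * dx - 2 * y * dy = du1 t).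
  { assert (Ha : is_derive (fun s => csqrt_re s * csqrt_re s - csqrt_im s * csqrt_im s) t
                   (2 * x * dx - 2 * y * dy)).
    { auto_derive; [repeat split; (apply ex_derive_csqrt_re || apply ex_derive_csqrt_im)|].
      change (fun x => csqrt_re x) with csqrt_re. change (fun x => csqrt_im x) with csqrt_im.
      unfold x, y, dx, dy. ring. }
    assert (Hb : is_derive (fun s => csqrt_re s * csqrt_re s - csqrt_im s * csqrt_im s) t (du1 t))
      by (apply is_derive_ext with u1; [apply csqrt_sq_re | auto]).
    rewrite <- (is_derive_unique _ _ _ Ha), <- (is_derive_unique _ _ _ Hb). auto. }
  assert (H2 : 2 * (dx * y + x * dy) = du2 t).
  { assert (Ha : is_derive (fun s => 2 * csqrt_re s * csqrt_im s) t (2 * (dx * y + x * dy))).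
    { auto_derive; [repeat split; (apply ex_derive_csqrt_re || apply ex_derive_csqrt_im)|].
      change (fun x => csqrt_re x) with csqrt_re. change (fun x => csqrt_im x) with csqrt_im.
      unfold x, y, dx, dy. ring. }
    assert (Hb : is_derive (fun s => 2 * csqrt_re s * csqrt_im s) t (du2 t))
      by (apply is_derive_ext with u2; [apply csqrt_sq_im | auto]).
    rewrite <- (is_derive_unique _ _ _ Ha), <- (is_derive_unique _ _ _ Hb). auto. }
  pose proof (csqrt_abs t) as Habs. fold x y in Habs. pose proof (cmod_pos t).
  unfold csqrt_re', csqrt_im'. fold x y. split.
  - replace ((x * du1 t + y * du2 t) / (2 * cmod t)) with dx; auto.
    rewrite <- H1, <- H2, <- Habs. field. lra.
  - replace ((x * du2 t - y * du1 t) / (2 * cmod t)) with dy; auto.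
    rewrite <- H1, <- H2, <- Habs. field. lra.
Qed.

Lemma ex_derive_csqrt' t : (forall s, ex_derive du1 s) -> (forall s, ex_derive du2 s) ->
  ex_derive csqrt_re' t /\ ex_derive csqrt_im' t.
Proof.
  intros Hd1 Hd2. pose proof (cmod_pos t).
  split; unfold csqrt_re', csqrt_im'; auto_derive;
    repeat split; auto using ex_derive_csqrt_re, ex_derive_csqrt_im, ex_derive_cmod; lra.
Qed.

Lemma csqrt_cross t : csqrt_im t * csqrt_im' t - csqrt_re t * csqrt_re' t = - du1 t / 2.
Proof.
  pose proof (cmod_pos t). unfold csqrt_re', csqrt_im'.
  transitivity (- (csqrt_re t * csqrt_re t + csqrt_im t * csqrt_im t) * du1 t / (2 * cmod t));
    [field | rewrite csqrt_abs; field]; lra.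
Qed.

Lemma csqrt_speed t :
  csqrt_re' t * csqrt_re' t + csqrt_im' t * csqrt_im' t = (du1 t * du1 t + du2 t * du2 t) / (4 * cmod t).
Proof.
  pose proof (cmod_pos t). unfold csqrt_re', csqrt_im'.
  transitivity ((csqrt_re t * csqrt_re t + csqrt_im t * csqrt_im t) * (du1 t * du1 t + du2 t * du2 t)
                / (4 * (cmod t * cmod t)));
    [field | rewrite csqrt_abs; field]; lra.
Qed.

End ComplexSqrt.

Section PlaneOfQ.
Variables (n lam : nat) (q : nat -> R).
Hypothesis HX : 0 < hdot n (xpart lam q) (xpart lam q).
Hypothesis HY : 0 < hdot n (ypart lam q) (ypart lam q).

Let rq := nrm n (xpart lam q).
Let sq := nrm n (ypart lam q).

Lemma hdot_plane a b c d :
  hdot n (fun i => a * xpart lam q i + b * ypart lam q i) (fun i => c * xpart lam q i + d * ypart lam q i)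
  = a * c * hdot n (xpart lam q) (xpart lam q) + b * d * hdot n (ypart lam q) (ypart lam q).
Proof.
  rewrite hdot_linl, !hdot_linr, hdot_xpart_ypart, (hdot_sym n (ypart lam q)), hdot_xpart_ypart. ring.
Qed.

Lemma xrefl_plane a b :
  xrefl lam (fun i => a * xpart lam q i + b * ypart lam q i) = (fun i => - a * xpart lam q i + b * ypart lam q i).
Proof.
  apply functional_extensionality; intros i. unfold xrefl, xpart, ypart. destruct (Nat.ltb i lam); ring.
Qed.

Lemma margin_plane zeta x y x' y' :
  margin n lam zeta (fun i => x / rq * xpart lam q i + y / sq * ypart lam q i)
                     (fun i => x' / rq * xpart lam q i + y' / sq * ypart lam q i)
  = sqrt zeta * (y * y' - x * x') - sqrt (x * x + y * y) * sqrt (x' * x' + y' * y').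
Proof.
  assert (0 < rq) by (apply sqrt_lt_R0; auto). assert (0 < sq) by (apply sqrt_lt_R0; auto).
  pose proof (nrm_sq n (xpart lam q)) as H1. pose proof (nrm_sq n (ypart lam q)) as H2. fold rq sq in H1, H2.
  unfold margin, nrm. rewrite xrefl_plane, !hdot_plane, <- H1, <- H2. fold rq sq.
  f_equal; [f_equal; field | f_equal; f_equal; field]; lra.
Qed.

End PlaneOfQ.

Section ApproachPath.
Variables (n lam : nat) (eps zeta : R) (q : nat -> R) (X0 : R).
Hypothesis Hln : (lam <= n)%nat.
Hypothesis Hz : 1 < zeta.
Hypothesis Hq : inbdF n lam eps zeta q.
Hypothesis HX0 : 0 < X0.
Hypothesis HX0e : X0 < eps.

Let Xq := hdot n (xpart lam q) (xpart lam q).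
Let Yq := hdot n (ypart lam q) (ypart lam q).
Let rq := nrm n (xpart lam q).
Let sq := nrm n (ypart lam q).

Lemma inbdF_split : 0 < Xq /\ 0 < Yq /\ (sqrt zeta - 1) * Yq = (sqrt zeta + 1) * Xq /\ Xq + Yq < eps * eps.
Proof.
  pose proof (xpart_pos_of_inbdF n lam eps zeta Hln Hz q Hq) as HX.
  pose proof (phiF_eq0_of_inbdF n lam eps zeta Hln Hz q Hq) as H0.
  rewrite (phiF_split n lam zeta Hln) in H0. destruct Hq as [[_ HN] _].
  rewrite (hdot_split_xy n lam Hln) in HN. fold Xq Yq in H0, HN, HX |- *.
  pose proof (sqrt_gt1 zeta Hz). replace (eps ^ 2) with (eps * eps) in HN by ring.
  assert (0 < (sqrt zeta + 1) * Xq) by (apply Rmult_lt_0_compat; lra).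
  repeat split; try lra. apply (Rmult_lt_reg_l (sqrt zeta - 1)); lra.
Qed.

Lemma approach_rq_pos : 0 < rq.
Proof. apply sqrt_lt_R0, inbdF_split. Qed.

Lemma approach_sq_pos : 0 < sq.
Proof. apply sqrt_lt_R0, inbdF_split. Qed.

(* The curve [w(t) = (1 - t) X0^2 + t^2 (rq + i sq)^2]; the path is [sqrt w] in the plane of [q]. *)
Let u1 t := (1 - t) * (X0 * X0) + t * t * (Xq - Yq).
Let u2 t := t * t * (2 * rq * sq).
Let du1 t := - (X0 * X0) + 2 * t * (Xq - Yq).
Let du2 t := 2 * t * (2 * rq * sq).

Lemma approach_derive1 t : is_derive u1 t (du1 t).
Proof. unfold u1, du1. auto_derive; auto. ring. Qed.

Lemma approach_derive2 t : is_derive u2 t (du2 t).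
Proof. unfold u2, du2. auto_derive; auto. ring. Qed.

Lemma approach_cut t : u2 t <> 0 \/ 0 < u1 t.
Proof.
  pose proof approach_rq_pos. pose proof approach_sq_pos. unfold u1, u2.
  destruct (Req_dec t 0) as [->|Ht]; [right; nra | left].
  assert (0 < t * t) by (apply Rsqr_pos_lt; auto). apply Rgt_not_eq, Rlt_gt.
  apply Rmult_lt_0_compat; [lra | apply Rmult_lt_0_compat; lra].
Qed.

Let g i t := csqrt_re u1 u2 t / rq * xpart lam q i + csqrt_im u1 u2 t / sq * ypart lam q i.
Let dg i t := csqrt_re' u1 u2 du1 du2 t / rq * xpart lam q i + csqrt_im' u1 u2 du1 du2 t / sq * ypart lam q i.

Lemma approach_rq_sq : rq * rq = Xq.
Proof. apply nrm_sq. Qed.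

Lemma approach_sq_sq : sq * sq = Yq.
Proof. apply nrm_sq. Qed.

(* [(rq + i sq)^2] is a null direction since [q] lies on [phiF = 0], and the term [-X0^2] pushes
   [w'] strictly inside the cone [sqrt zeta * (- Re w') > |w'|]. *)
Lemma approach_cone t : 0 <= t <= 1 ->
  du1 t < 0 /\ du1 t * du1 t + du2 t * du2 t < zeta * (du1 t * du1 t).
Proof.
  intros Ht. destruct inbdF_split as (HX & HY & Hbd & _).
  pose proof (sqrt_gt1 zeta Hz). pose proof (sqrt_sqrt zeta ltac:(lra)).
  assert (HXY : Xq < Yq) by nra.
  assert (Hnull : (zeta - 1) * ((Yq - Xq) * (Yq - Xq)) = 4 * Xq * Yq).
  { replace (zeta - 1) with ((sqrt zeta - 1) * (sqrt zeta + 1)) by nra.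
    replace (4 * Xq * Yq) with ((2 * Xq) * (2 * Yq)) by ring.
    replace (2 * Xq) with ((sqrt zeta - 1) * (Yq - Xq)) by lra.
    replace (2 * Yq) with ((sqrt zeta + 1) * (Yq - Xq)) by lra. ring. }
  assert (Hu2 : du2 t * du2 t = 4 * (t * t) * (4 * Xq * Yq))
    by (unfold du2; rewrite <- approach_rq_sq, <- approach_sq_sq; ring).
  unfold du1 in *. split; [nra|]. rewrite Hu2, <- Hnull.
  assert (0 < (zeta - 1) * (X0 * X0 * (X0 * X0) + 4 * t * (X0 * X0) * (Yq - Xq))).
  { apply Rmult_lt_0_compat; [lra|].
    assert (0 < X0 * X0 * (X0 * X0)) by (assert (0 < X0 * X0) by nra; nra).
    assert (0 <= 4 * t * (X0 * X0) * (Yq - Xq)) by (repeat apply Rmult_le_pos; nra). lra. }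
  nra.
Qed.

Lemma approach_cmod_lt t : 0 <= t <= 1 -> cmod u1 u2 t < eps * eps.
Proof.
  intros Ht. destruct inbdF_split as (HX & HY & _ & HW).
  set (W := Xq + Yq) in *.
  assert (HB : cmod u1 u2 t <= (1 - t) * (X0 * X0) + t * t * W).
  { unfold cmod. rewrite <- (sqrt_square ((1 - t) * (X0 * X0) + t * t * W)) by (unfold W; nra).
    apply sqrt_le_1_alt.
    (* the defect is [4 (1 - t) X0^2 t^2 Yq], because [|(rq + i sq)^2| = Xq + Yq] *)
    assert (Hu2 : u2 t * u2 t = t * t * (t * t) * (4 * Xq * Yq))
      by (unfold u2; rewrite <- approach_rq_sq, <- approach_sq_sq; ring).
    rewrite Hu2. unfold u1, W.
    assert (0 <= (1 - t) * (X0 * X0) * (t * t) * Yq) by (repeat apply Rmult_le_pos; nra). nra. }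
  assert (X0 * X0 < eps * eps) by nra.
  assert (0 <= t * (1 - t) * W) by (repeat apply Rmult_le_pos; unfold W; lra).
  destruct (Rlt_or_le 0 t).
  - assert (t * W < t * (eps * eps)) by (apply Rmult_lt_compat_l; lra).
    assert ((1 - t) * (X0 * X0) <= (1 - t) * (eps * eps)) by (apply Rmult_le_compat_l; lra). lra.
  - assert (t = 0) by lra. subst t. lra.
Qed.

Lemma approach_margin t : 0 <= t <= 1 -> 0 < margin n lam zeta (fun i => g i t) (fun i => dg i t).
Proof.
  intros Ht. pose proof approach_cut as Hcut. destruct inbdF_split as (HX & HY & _).
  unfold g, dg, rq, sq. cbv beta. rewrite margin_plane by auto.
  rewrite (csqrt_cross u1 u2 du1 du2 Hcut), (csqrt_abs u1 u2 Hcut), (csqrt_speed u1 u2 du1 du2 Hcut).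
  destruct (approach_cone t Ht) as [Hneg Hcone].
  pose proof (cmod_pos u1 u2 Hcut t). pose proof (sqrt_gt1 zeta Hz).
  pose proof (sqrt_sqrt zeta ltac:(lra)) as Hs.
  set (S := du1 t * du1 t + du2 t * du2 t) in *.
  rewrite <- sqrt_mult_alt by lra.
  replace (cmod u1 u2 t * (S / (4 * cmod u1 u2 t))) with (S / 4) by (field; lra).
  assert (0 < sqrt zeta * (- du1 t / 2)) by (apply Rmult_lt_0_compat; lra).
  rewrite <- (sqrt_square (sqrt zeta * (- du1 t / 2))) at 1 by lra.
  enough (sqrt (S / 4) < sqrt (sqrt zeta * (- du1 t / 2) * (sqrt zeta * (- du1 t / 2)))) by lra.
  apply sqrt_lt_1_alt. split; [unfold S; nra|].
  replace (sqrt zeta * (- du1 t / 2) * (sqrt zeta * (- du1 t / 2))) with (zeta * (du1 t * du1 t) / 4)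
    by (transitivity (sqrt zeta * sqrt zeta * (du1 t * du1 t) / 4); [rewrite Hs|]; field). lra.
Qed.

Lemma approach_timelike : timelike_path n lam eps zeta g dg.
Proof.
  pose proof approach_rq_pos. pose proof approach_sq_pos.
  pose proof approach_derive1 as D1. pose proof approach_derive2 as D2. pose proof approach_cut as Hcut.
  assert (Hd : forall s, ex_derive du1 s /\ ex_derive du2 s)
    by (intros s; split; unfold du1, du2; auto_derive; auto).
  split; [|split; [|split]].
  - intros i t. destruct (is_derive_csqrt u1 u2 du1 du2 D1 D2 Hcut t) as [Hre Him].
    unfold g, dg. auto_derive.
    + split; [eexists; apply Hre | split; [eexists; apply Him | exact I]].
    + change (fun x => csqrt_re u1 u2 x) with (csqrt_re u1 u2).
      change (fun x => csqrt_im u1 u2 x) with (csqrt_im u1 u2).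
      rewrite (is_derive_unique _ _ _ Hre), (is_derive_unique _ _ _ Him). field. lra.
  - intros i t. destruct (ex_derive_csqrt' u1 u2 du1 du2 D1 D2 Hcut t (fun s => proj1 (Hd s))
      (fun s => proj2 (Hd s))) as [Hre Him].
    apply (ex_derive_continuous (K := R_AbsRing) (V := R_NormedModule)).
    unfold dg. auto_derive. auto.
  - intros t Ht. pose proof (cmod_pos u1 u2 Hcut t). pose proof (approach_cmod_lt t Ht).
    assert (Hgg : hdot n (fun i => g i t) (fun i => g i t) = cmod u1 u2 t).
    { unfold g. rewrite hdot_plane, <- (csqrt_abs u1 u2 Hcut t). fold Xq Yq.
      rewrite <- approach_rq_sq, <- approach_sq_sq. field. lra. }
    split; rewrite Hgg; [lra | simpl; lra].
  - apply approach_margin.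
Qed.

Lemma approach_start i : g i 0 = X0 / rq * xpart lam q i /\ dg i 0 = - X0 / (2 * rq) * xpart lam q i.
Proof.
  pose proof approach_rq_pos. pose proof approach_sq_pos.
  assert (Hm : cmod u1 u2 0 = X0 * X0).
  { unfold cmod, u1, u2. cbv beta. replace (_ * _ + _ * _) with (X0 * X0 * (X0 * X0)) by ring.
    apply sqrt_square. nra. }
  assert (Hre : csqrt_re u1 u2 0 = X0).
  { unfold csqrt_re. rewrite Hm. unfold u1. cbv beta.
    replace ((X0 * X0 + _) / 2) with (X0 * X0) by field. apply sqrt_square. lra. }
  assert (Him : csqrt_im u1 u2 0 = 0) by (unfold csqrt_im; rewrite Hre; unfold u2; cbv beta; field; lra).
  unfold g, dg, csqrt_re', csqrt_im'. rewrite Hm, Hre, Him. unfold du1, du2. cbv beta. split; field; lra.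
Qed.

Lemma approach_end i : (i < n)%nat -> g i 1 = q i.
Proof.
  intros Hi. pose proof approach_rq_pos. pose proof approach_sq_pos.
  assert (Hm : cmod u1 u2 1 = rq * rq + sq * sq).
  { unfold cmod, u1, u2. cbv beta. rewrite <- approach_rq_sq, <- approach_sq_sq.
    replace (_ * _ + _ * _) with ((rq * rq + sq * sq) * (rq * rq + sq * sq)) by ring.
    apply sqrt_square. nra. }
  assert (Hre : csqrt_re u1 u2 1 = rq).
  { unfold csqrt_re. rewrite Hm. unfold u1. cbv beta. rewrite <- approach_rq_sq, <- approach_sq_sq.
    replace ((rq * rq + sq * sq + _) / 2) with (rq * rq) by field. apply sqrt_square. lra. }
  assert (Him : csqrt_im u1 u2 1 = sq) by (unfold csqrt_im; rewrite Hre; unfold u2; cbv beta; field; lra).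
  unfold g. rewrite Hre, Him, (xpart_add_ypart lam q i). field. lra.
Qed.

Lemma approach_path : exists g dg, timelike_path n lam eps zeta g dg /\
  (forall i, g i 0 = X0 / rq * xpart lam q i /\ dg i 0 = - X0 / (2 * rq) * xpart lam q i) /\
  (forall i, (i < n)%nat -> g i 1 = q i).
Proof. exists g, dg. split; [apply approach_timelike | split; [apply approach_start | apply approach_end]]. Qed.

End ApproachPath.

Lemma margin_radial_ge n lam zeta z e K : 1 < zeta -> 0 <= K ->
  K * phiP n lam zeta z - (sqrt zeta + 1) * (nrm n z * nrm n e)
  <= margin n lam zeta z (fun i => - K * z i + e i).
Proof.
  intros Hz HK. unfold margin, phiP.
  replace (fun i => - K * z i + e i) with (fun i => - K * z i + 1 * e i)
    by (apply functional_extensionality; intros; ring).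
  rewrite hdot_linr.
  assert (Hv : nrm n (fun i => - K * z i + 1 * e i) <= K * nrm n z + nrm n e).
  { eapply Rle_trans; [apply (nrm_triangle n (fun i => - K * z i) (fun i => 1 * e i))|].
    rewrite !nrm_scal, Rabs_Ropp, Rabs_right, Rabs_R1 by lra. lra. }
  pose proof (Rabs_hdot_le n (xrefl lam z) e) as HC. rewrite nrm_xrefl in HC.
  pose proof (Rle_abs (- hdot n (xrefl lam z) e)) as HA. rewrite Rabs_Ropp in HA.
  pose proof (nrm_ge0 n z). pose proof (nrm_ge0 n e). pose proof (nrm_sq n z).
  pose proof (sqrt_gt1 zeta Hz).
  assert (nrm n z * nrm n (fun i => - K * z i + 1 * e i) <= nrm n z * (K * nrm n z + nrm n e))
    by (apply Rmult_le_compat_l; auto).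
  assert (- (sqrt zeta * (nrm n z * nrm n e)) <= sqrt zeta * hdot n (xrefl lam z) e)
    by (rewrite Ropp_mult_distr_r; apply Rmult_le_compat_l; lra).
  nra.
Qed.

Lemma cos_sin_sq x : cos x * cos x + sin x * sin x = 1.
Proof. pose proof (sin2_cos2 x). unfold Rsqr in *. lra. Qed.

Section Spiral.
Variables (n lam : nat) (eps zeta : R) (p B : nat -> R) (Th K : R).
Hypothesis Hln : (lam <= n)%nat.
Hypothesis Hz : 1 < zeta.
Hypothesis Hp : inP n lam eps zeta p.
Hypothesis HBx : in_xspace lam B.
Hypothesis HAB : hdot n (xpart lam p) B = 0.
Hypothesis HBB : hdot n B B = hdot n (xpart lam p) (xpart lam p).
Hypothesis HTh : 0 <= Th <= PI.
Hypothesis HK0 : 0 < K.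

Let A := xpart lam p.
Let Y := ypart lam p.
Let Xp := hdot n A A.
Let Yp := hdot n Y Y.

Hypothesis HK : 6 * (sqrt zeta + 1) * (Xp + Yp) < K * phiP n lam zeta p.

Lemma hdot_span3 a1 b1 c1 a2 b2 c2 :
  hdot n (fun i => a1 * A i + b1 * B i + c1 * Y i) (fun i => a2 * A i + b2 * B i + c2 * Y i)
  = (a1 * a2 + b1 * b2) * Xp + c1 * c2 * Yp.
Proof.
  assert (HAY : hdot n A Y = 0) by apply hdot_xpart_ypart.
  assert (HBY : hdot n B Y = 0) by (apply hdot_xspace_ypart; auto).
  rewrite hdot_lin3l, !hdot_lin3r, (hdot_sym n B A), (hdot_sym n Y A), (hdot_sym n Y B), HAY, HBY.
  fold A in HAB, HBB. rewrite HAB, HBB. fold Xp Yp. ring.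
Qed.

Lemma xrefl_span3 a b c :
  xrefl lam (fun i => a * A i + b * B i + c * Y i) = (fun i => (- a) * A i + (- b) * B i + c * Y i).
Proof.
  apply functional_extensionality; intros i. unfold xrefl, A, Y, xpart, ypart.
  destruct (Nat.ltb_spec i lam); [ring|]. rewrite HBx by lia. ring.
Qed.

(* [theta'(1) = 0] and the y-part decays like [(1 - t)^2], so the final velocity is radial, as
   gluing with the approach path requires. *)
Let theta t := Th * (3 * t * t - 2 * t * t * t).
Let dtheta t := Th * (6 * t - 6 * t * t).

Let g i t := exp (- K * t) * (cos (theta t) * A i + sin (theta t) * B i + (1 - t) * (1 - t) * Y i).
Let e i t := exp (- K * t) * (- dtheta t * sin (theta t) * A i + dtheta t * cos (theta t) * B i
                               + - 2 * (1 - t) * Y i).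
Let dg i t := - K * g i t + e i t.

Lemma spiral_derive i t : is_derive (g i) t (dg i t).
Proof. unfold dg, g, e, theta, dtheta. auto_derive; auto. unfold Rminus. ring. Qed.

Lemma spiral_continuous i t : continuous (dg i) t.
Proof.
  apply (ex_derive_continuous (K := R_AbsRing) (V := R_NormedModule)).
  unfold dg, g, e, theta, dtheta. auto_derive. auto.
Qed.

Lemma spiral_span3 t :
  (fun i => g i t) = (fun i => (exp (- K * t) * cos (theta t)) * A i + (exp (- K * t) * sin (theta t)) * B i
                              + (exp (- K * t) * ((1 - t) * (1 - t))) * Y i) /\
  (fun i => e i t) = (fun i => (exp (- K * t) * (- dtheta t * sin (theta t))) * A i
                              + (exp (- K * t) * (dtheta t * cos (theta t))) * B i
                              + (exp (- K * t) * (- 2 * (1 - t))) * Y i).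
Proof. split; apply functional_extensionality; intros i; unfold g, e; ring. Qed.

Lemma spiral_hdot t :
  hdot n (fun i => g i t) (fun i => g i t) = exp (- K * t) ^ 2 * (Xp + (1 - t) ^ 4 * Yp).
Proof.
  rewrite (proj1 (spiral_span3 t)), hdot_span3.
  set (c := cos (theta t)). set (s := sin (theta t)).
  transitivity (exp (- K * t) ^ 2 * ((c * c + s * s) * Xp + (1 - t) ^ 4 * Yp));
    [ring | unfold c, s; rewrite cos_sin_sq; ring].
Qed.

Lemma spiral_phiP t : phiP n lam zeta (fun i => g i t) =
  exp (- K * t) ^ 2 * (sqrt zeta * (Xp - (1 - t) ^ 4 * Yp) - (Xp + (1 - t) ^ 4 * Yp)).
Proof.
  unfold phiP. rewrite spiral_hdot, (proj1 (spiral_span3 t)), xrefl_span3, hdot_span3.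
  set (c := cos (theta t)). set (s := sin (theta t)).
  transitivity (exp (- K * t) ^ 2 *
    (sqrt zeta * ((c * c + s * s) * Xp - (1 - t) ^ 4 * Yp) - (Xp + (1 - t) ^ 4 * Yp)));
    [ring | unfold c, s; rewrite cos_sin_sq; ring].
Qed.

Lemma spiral_error_hdot t :
  hdot n (fun i => e i t) (fun i => e i t) = exp (- K * t) ^ 2 * (dtheta t ^ 2 * Xp + 4 * (1 - t) ^ 2 * Yp).
Proof.
  rewrite (proj2 (spiral_span3 t)), hdot_span3.
  set (c := cos (theta t)). set (s := sin (theta t)).
  transitivity (exp (- K * t) ^ 2 * (dtheta t ^ 2 * (c * c + s * s) * Xp + 4 * (1 - t) ^ 2 * Yp));
    [ring | unfold c, s; rewrite cos_sin_sq; ring].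
Qed.

Lemma dtheta_bound t : 0 <= t <= 1 -> 0 <= dtheta t <= 6.
Proof.
  intros Ht. unfold dtheta. pose proof PI_4.
  assert (0 <= 6 * t - 6 * t * t <= 3 / 2) by (pose proof (pow2_ge_0 (2 * t - 1)); nra).
  split; [apply Rmult_le_pos; lra|].
  apply Rle_trans with (4 * (3 / 2)); [apply Rmult_le_compat; lra | lra].
Qed.

Lemma spiral_bounds t : 0 <= t <= 1 ->
  ((1 - t) ^ 4 * Yp <= Yp /\ 0 <= (1 - t) ^ 4 * Yp) /\ 0 < Xp /\ 0 <= Yp /\ 0 < exp (- K * t) ^ 2.
Proof.
  intros Ht. pose proof (phiP_pos_of_inP n lam eps zeta Hln Hz p Hp) as HP.
  rewrite (phiP_split n lam zeta Hln) in HP. fold A Y Xp Yp in HP.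
  pose proof (sqrt_gt1 zeta Hz). pose proof (hdot_ge0 n Y). fold Yp in H0.
  assert (0 <= (1 - t) ^ 4 <= 1) by (split; [apply pow_le; lra | rewrite <- (pow1 4); apply pow_incr; lra]).
  repeat split; try nra. apply pow_lt, exp_pos.
Qed.

Lemma spiral_margin t : 0 <= t <= 1 -> 0 < margin n lam zeta (fun i => g i t) (fun i => dg i t).
Proof.
  intros Ht. destruct (spiral_bounds t Ht) as ([H4 H4'] & HX & HY & Hex).
  pose proof (dtheta_bound t Ht). pose proof (sqrt_gt1 zeta Hz).
  set (ex2 := exp (- K * t) ^ 2) in *.
  assert (HphiP : ex2 * phiP n lam zeta p <= phiP n lam zeta (fun i => g i t)).
  { rewrite spiral_phiP, (phiP_split n lam zeta Hln). fold A Y Xp Yp ex2.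
    assert (0 <= ex2 * ((sqrt zeta + 1) * (Yp - (1 - t) ^ 4 * Yp))) by (apply Rmult_le_pos; nra). nra. }
  assert (Hge : nrm n (fun i => g i t) * nrm n (fun i => e i t) <= 6 * (ex2 * (Xp + Yp))).
  { pose proof (nrm_ge0 n (fun i => g i t)). pose proof (nrm_ge0 n (fun i => e i t)).
    apply Rsqr_incr_0_var; [unfold Rsqr | nra].
    replace (nrm n (fun i => g i t) * nrm n (fun i => e i t) * (nrm n (fun i => g i t) * nrm n (fun i => e i t)))
      with (hdot n (fun i => g i t) (fun i => g i t) * hdot n (fun i => e i t) (fun i => e i t))
      by (rewrite <- !nrm_sq; ring).
    rewrite spiral_hdot, spiral_error_hdot. fold ex2.
    assert (Hd2 : dtheta t ^ 2 <= 36) by (replace 36 with (6 ^ 2) by ring; apply pow_incr; lra).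
    assert (Ht2 : (1 - t) ^ 2 <= 1) by (rewrite <- (pow1 2); apply pow_incr; lra).
    assert (0 <= dtheta t ^ 2 * Xp + 4 * (1 - t) ^ 2 * Yp <= 36 * (Xp + Yp))
      by (split; [pose proof (pow2_ge_0 (dtheta t)); pose proof (pow2_ge_0 (1 - t)); nra | nra]).
    assert (0 <= Xp + (1 - t) ^ 4 * Yp <= Xp + Yp) by lra.
    assert ((Xp + (1 - t) ^ 4 * Yp) * (dtheta t ^ 2 * Xp + 4 * (1 - t) ^ 2 * Yp) <= (Xp + Yp) * (36 * (Xp + Yp)))
      by (apply Rmult_le_compat; lra).
    replace (6 * (ex2 * (Xp + Yp)) * (6 * (ex2 * (Xp + Yp)))) with (ex2 * ex2 * ((Xp + Yp) * (36 * (Xp + Yp))))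
      by ring.
    replace (ex2 * (Xp + (1 - t) ^ 4 * Yp) * (ex2 * (dtheta t ^ 2 * Xp + 4 * (1 - t) ^ 2 * Yp))) with
      (ex2 * ex2 * ((Xp + (1 - t) ^ 4 * Yp) * (dtheta t ^ 2 * Xp + 4 * (1 - t) ^ 2 * Yp))) by ring.
    apply Rmult_le_compat_l; nra. }
  unfold dg. eapply Rlt_le_trans; [|apply margin_radial_ge; lra].
  assert (K * (ex2 * phiP n lam zeta p) <= K * phiP n lam zeta (fun i => g i t))
    by (apply Rmult_le_compat_l; lra).
  assert ((sqrt zeta + 1) * (nrm n (fun i => g i t) * nrm n (fun i => e i t))
          <= (sqrt zeta + 1) * (6 * (ex2 * (Xp + Yp)))) by (apply Rmult_le_compat_l; lra).
  assert (0 < ex2 * (K * phiP n lam zeta p - 6 * (sqrt zeta + 1) * (Xp + Yp)))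
    by (apply Rmult_lt_0_compat; lra).
  lra.
Qed.

Lemma spiral_inN t : 0 <= t <= 1 -> inN n eps (fun i => g i t).
Proof.
  intros Ht. destruct (spiral_bounds t Ht) as ([H4 H4'] & HX & HY & Hex).
  destruct Hp as [[_ Hpe] _]. rewrite (hdot_split_xy n lam Hln) in Hpe. fold A Y Xp Yp in Hpe.
  assert (Hex1 : exp (- K * t) ^ 2 <= 1).
  { rewrite <- (pow1 2). apply pow_incr. split; [apply Rlt_le, exp_pos|].
    rewrite <- exp_0. destruct (Req_dec t 0) as [->|]; [right; f_equal; ring|].
    left. apply exp_increasing. nra. }
  unfold inN. rewrite spiral_hdot. split; [apply Rmult_lt_0_compat; lra|].
  apply Rle_lt_trans with (1 * (Xp + Yp)); [apply Rmult_le_compat; lra | lra].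
Qed.

Lemma spiral_path : exists g dg, timelike_path n lam eps zeta g dg /\ (forall i, (i < n)%nat -> g i 0 = p i) /\
  (forall i, g i 1 = exp (- K) * (cos Th * A i + sin Th * B i) /\ dg i 1 = - K * g i 1).
Proof.
  exists g, dg. split; [split; [|split; [|split]] | split].
  - apply spiral_derive.
  - apply spiral_continuous.
  - apply spiral_inN.
  - apply spiral_margin.
  - intros i _. unfold g, theta. rewrite (xpart_add_ypart lam p i).
    replace (Th * (3 * 0 * 0 - 2 * 0 * 0 * 0)) with 0 by ring.
    rewrite cos_0, sin_0, Rmult_0_r, exp_0. fold A Y. ring.
  - intros i. unfold dg, e, g, theta, dtheta.
    replace (Th * (3 * 1 * 1 - 2 * 1 * 1 * 1)) with Th by ring.
    replace (- K * 1) with (- K) by ring. split; ring.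
Qed.

End Spiral.

Lemma chron_of_inP_bdF n lam eps zeta p q : (lam <= n)%nat -> (2 <= lam)%nat -> 1 < zeta -> 0 < eps ->
  inP n lam eps zeta p -> inbdF n lam eps zeta q -> chron n lam eps zeta p q.
Proof.
  intros Hln Hl2 Hz Heps Hp Hq.
  pose proof (xpart_pos_of_inP n lam eps zeta Hln Hz p Hp) as HA.
  pose proof (xpart_pos_of_inbdF n lam eps zeta Hln Hz q Hq) as HQ.
  pose proof (phiP_pos_of_inP n lam eps zeta Hln Hz p Hp) as HP.
  set (A := xpart lam p) in *.
  destruct (xspace_rotation n lam Hln Hl2 A (xpart lam q) (xpart_in_xspace lam p) (xpart_in_xspace lam q) HA HQ)
    as (B & Th & HBx & HAB & HBB & HTh & Hrot).
  set (S := 6 * (sqrt zeta + 1) * (hdot n A A + hdot n (ypart lam p) (ypart lam p))).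
  assert (HS : 0 <= S).
  { pose proof (sqrt_gt1 zeta Hz). pose proof (hdot_ge0 n (ypart lam p)). unfold S.
    apply Rmult_le_pos; lra. }
  set (K := S / phiP n lam zeta p + 1).
  assert (HK0 : 0 < K) by (unfold K; pose proof (Rdiv_le_0_compat S _ HS HP); lra).
  assert (HK : S < K * phiP n lam zeta p) by
    (unfold K; replace ((S / phiP n lam zeta p + 1) * phiP n lam zeta p) with (S + phiP n lam zeta p)
       by (field; lra); lra).
  destruct (spiral_path n lam eps zeta p B Th K Hln Hz Hp HBx HAB HBB HTh HK0 HK)
    as (g1 & dg1 & T1 & S1 & E1).
  set (X0 := exp (- K) * nrm n A).
  assert (HrQ : 0 < nrm n (xpart lam q)) by (apply sqrt_lt_R0; auto).
  assert (HX0 : 0 < X0 < eps).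
  { assert (HrA : 0 < nrm n A) by (apply sqrt_lt_R0; auto).
    assert (Hek : exp (- K) < 1) by (rewrite <- exp_0; apply exp_increasing; lra).
    assert (HAe : nrm n A < eps).
    { destruct Hp as [[_ Hpe] _]. rewrite (hdot_split_xy n lam Hln) in Hpe.
      pose proof (hdot_ge0 n (ypart lam p)). apply nrm_lt_of_hdot; [lra|]. unfold A. simpl in Hpe. lra. }
    unfold X0. split; [apply Rmult_lt_0_compat; [apply exp_pos | lra] |].
    apply Rle_lt_trans with (1 * nrm n A); [apply Rmult_le_compat_r; lra | lra]. }
  destruct (approach_path n lam eps zeta q X0 Hln Hz Hq (proj1 HX0) (proj2 HX0)) as (g2 & dg2 & T2 & S2 & E2).
  destruct (timelike_path_glue n lam eps zeta g1 dg1 g2 dg2 (1 / (2 * K))) as (g & dg & T & E);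
    auto.
  - apply Rdiv_lt_0_compat; lra.
  - intros i. rewrite (proj1 (E1 i)), (proj1 (S2 i)), Hrot. unfold X0. field. lra.
  - intros i. rewrite (proj2 (E1 i)), (proj1 (E1 i)), (proj2 (S2 i)), Hrot. unfold X0. field. lra.
  - apply (chron_of_timelike_path n lam eps zeta p q g dg Hz T).
    intros i Hi. rewrite (proj1 (E i)), (proj2 (E i)). auto.
Qed.

Theorem claim1 (n lam : nat) (eps zeta : R)
  (Hn : (3 <= n)%nat) (Hlam1 : (1 <= lam)%nat) (Hlam2 : (lam <= n - 1)%nat)
  (Heps : 0 < eps) (Hzeta : 1 < zeta) :
  (* (i) *)
  (forall q, inF n lam eps zeta q ->
     forall p, inP n lam eps zeta p -> chron n lam eps zeta p q) /\
  (* (ii) *)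
  (forall q, inbdF n lam eps zeta q ->
     forall p, chron n lam eps zeta q p -> inF n lam eps zeta p) /\
  (* (iii)(a) *)
  (forall q, inbdF n lam eps zeta q -> lam <> 1%nat ->
     forall p, inP n lam eps zeta p -> chron n lam eps zeta p q) /\
  (* (iii)(b) *)
  (forall q, inbdF n lam eps zeta q -> lam = 1%nat ->
     (forall p, inP2 n lam eps zeta p -> ~ chron n lam eps zeta p q) \/
     (forall p, inP1 n lam eps zeta p -> ~ chron n lam eps zeta p q)).
Proof.
  assert (Hln : (lam <= n)%nat) by lia.
  split; [|split; [|split]].
  - intros q Hq p Hp. apply (chron_of_inP_inF n lam eps zeta p q); auto.
  - intros q Hq p Hc. apply (inF_of_chron_from_bdF n lam eps zeta Hln Hzeta q p); auto.
  - intros q Hq Hl p Hp. apply chron_of_inP_bdF; auto; lia.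
  - intros q Hq ->. apply chron_to_bdF_one_side; auto; lia.
Qed.
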